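(* Let $L$ be a left adequate semigroup and $R$ a right adequate semigroup with a common quasi-ideal adequate transversal $S^0$. Let $L|\times|R=\{(x,a)\in L\times R:\overline{x}=\overline{a}\}$ with multiplication $(x,a)(y,b)=(x\overline{y},\,\overline{a}b)=(x\overline{b},\,\overline{x}b)$. Then $L|\times|R$ is a quasi-adequate semigroup with an admissible, quasi-ideal adequate transversal isomorphic to $S^0$. Moreover every quasi-adequate semigroup with an admissible, quasi-ideal adequate transversal can be constructed (up to isomorphism) in this way.
   Context: For a semigroup $S$, $S^1$ is $S$ with an identity adjoined, $\mathcal{L},\mathcal{R}$ Green's relations. $\mathcal{R}^\ast=\{(a,b):\forall x,y\in S^1,\ xa=ya\iff xb=yb\}$, $\mathcal{L}^\ast=\{(a,b):\forall x,y\in S^1,\ ax=ay\iff bx=by\}$. $S$ is abundant if each $\mathcal{R}^\ast$- and $\mathcal{L}^\ast$-class contains an idempotent; adequate if also idempotents commute (then $a^+$, $a^\ast$ denote the unique idempotents $\mathcal{R}^\ast$-, resp. $\mathcal{L}^\ast$-related to $a$); left adequate (right adequate) if abundant and every $\mathcal{R}^\ast$-class (every $\mathcal{L}^\ast$-class) contains a unique idempotent. An abundant subsemigroup $U$ of abundant $S$ is a $\ast$-subsemigroup if $\mathcal{L}^\ast(U)=\mathcal{L}^\ast(S)\cap(U\times U)$, $\mathcal{R}^\ast(U)=\mathcal{R}^\ast(S)\cap(U\times U)$. An adequate $\ast$-subsemigroup $S^0$ of abundant $S$ is an adequate transversal if each $x\in S$ has a unique $\overline{x}\in S^0$ and idempotents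 $e,f$ with $x=e\overline{x}f$, $e\,\mathcal{L}\,\overline{x}^+$, $f\,\mathcal{R}\,\overline{x}^\ast$. It is a quasi-ideal if $S^0SS^0\subseteq S^0$, and (when $S$ is quasi-adequate, i.e. abundant with idempotents forming a subsemigroup) admissible if $\overline{xy}=\overline{x}\,\overline{y}$ for all $x,y$. ''Common quasi-ideal adequate transversal'' means $S^0$ is a subsemigroup of both $L$ and $R$ and is a quasi-ideal adequate transversal of each; $\overline{x}$ for $x\in L$ is computed in $L$, for $a\in R$ in $R$. *)

From Stdlib Require Import ClassicalDescription.

Set Implicit Arguments.
Unset Strict Implicit.

Section Semigroup.
Variables (T : Type) (mul : T -> T -> T).

Definition associative := forall a b c, mul a (mul b c) = mul (mul a b) c.

Definition idempotent (e : T) := mul e e = e.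

(* Left / right multiplication by an element of S^1 (None = adjoined identity). *)
Definition lmul1 (x : option T) (a : T) : T :=
  match x with Some x => mul x a | None => a end.
Definition rmul1 (a : T) (x : option T) : T :=
  match x with Some x => mul a x | None => a end.

Definition in1 (P : T -> Prop) (x : option T) : Prop :=
  match x with Some x => P x | None => True end.

Definition full : T -> Prop := fun _ => True.

Definition GreenL (a b : T) :=
  exists x y : option T, a = lmul1 x b /\ b = lmul1 y a.
Definition GreenR (a b : T) :=
  exists x y : option T, a = rmul1 b x /\ b = rmul1 a y.

Definition RstarIn (P : T -> Prop) (a b : T) :=
  forall x y : option T, in1 P x -> in1 P y ->
    (lmul1 x a = lmul1 y a <-> lmul1 x b = lmul1 y b).
Definition LstarIn (P : T -> Prop) (a b : T) :=
  forall x y : option T, in1 P x -> in1 P y ->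
    (rmul1 a x = rmul1 a y <-> rmul1 b x = rmul1 b y).

Definition Rstar := RstarIn full.
Definition Lstar := LstarIn full.

Definition subsemigroup (P : T -> Prop) :=
  forall a b, P a -> P b -> P (mul a b).

Definition abundant_in (P : T -> Prop) :=
  forall a, P a ->
    (exists e, P e /\ idempotent e /\ RstarIn P a e) /\
    (exists f, P f /\ idempotent f /\ LstarIn P a f).

Definition idempotents_commute_in (P : T -> Prop) :=
  forall e f, P e -> P f -> idempotent e -> idempotent f -> mul e f = mul f e.

Definition adequate_in (P : T -> Prop) :=
  abundant_in P /\ idempotents_commute_in P.

Definition abundant := abundant_in full.
Definition adequate := adequate_in full.

Definition left_adequate :=
  abundant /\
  forall a e f, idempotent e -> idempotent f -> Rstar a e -> Rstar a f -> e = f.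

Definition right_adequate :=
  abundant /\
  forall a e f, idempotent e -> idempotent f -> Lstar a e -> Lstar a f -> e = f.

Definition quasi_adequate :=
  abundant /\ forall e f, idempotent e -> idempotent f -> idempotent (mul e f).

Definition star_subsemigroup (P : T -> Prop) :=
  subsemigroup P /\ abundant_in P /\
  (forall a b, P a -> P b -> (LstarIn P a b <-> Lstar a b)) /\
  (forall a b, P a -> P b -> (RstarIn P a b <-> Rstar a b)).

Definition is_plus (P : T -> Prop) (a p : T) :=
  P p /\ idempotent p /\ RstarIn P a p.
Definition is_star (P : T -> Prop) (a q : T) :=
  P q /\ idempotent q /\ LstarIn P a q.

Definition is_bar (P : T -> Prop) (x s : T) :=
  P s /\ exists e f, idempotent e /\ idempotent f /\ x = mul (mul e s) f /\
    (exists p, is_plus P s p /\ GreenL e p) /\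
    (exists q, is_star P s q /\ GreenR f q).

Definition adequate_transversal (P : T -> Prop) :=
  star_subsemigroup P /\ adequate_in P /\
  forall x, exists! s, is_bar P x s.

Definition quasi_ideal (P : T -> Prop) :=
  forall a x b, P a -> P b -> P (mul (mul a x) b).

Definition admissible (P : T -> Prop) :=
  forall x y s t, is_bar P x s -> is_bar P y t -> is_bar P (mul x y) (mul s t).

End Semigroup.

Definition image {A B : Type} (f : A -> B) : B -> Prop :=
  fun b => exists a, b = f a.

Definition injective {A B : Type} (f : A -> B) := forall a a', f a = f a' -> a = a'.
Definition surjective {A B : Type} (f : A -> B) := forall b, exists a, b = f a.
Definition morphism {A B : Type} (mA : A -> A -> A) (mB : B -> B -> B) (f : A -> B) :=
  forall a a', f (mA a a') = mB (f a) (f a').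

(* L left adequate, R right adequate, S0 a common quasi-ideal adequate
   transversal (embedded in L and R by injective morphisms iL, iR), and
   barL, barR the bar maps computed in L and in R respectively. *)
Definition common_setup (L R S0 : Type) (mulL : L -> L -> L) (mulR : R -> R -> R)
  (mul0 : S0 -> S0 -> S0) (iL : S0 -> L) (iR : S0 -> R)
  (barL : L -> S0) (barR : R -> S0) : Prop :=
  associative mulL /\ associative mulR /\ associative mul0 /\
  left_adequate mulL /\ right_adequate mulR /\
  injective iL /\ morphism mul0 mulL iL /\
  injective iR /\ morphism mul0 mulR iR /\
  adequate_transversal mulL (image iL) /\ quasi_ideal mulL (image iL) /\
  adequate_transversal mulR (image iR) /\ quasi_ideal mulR (image iR) /\
  (forall x, is_bar mulL (image iL) x (iL (barL x))) /\
  (forall a, is_bar mulR (image iR) a (iR (barR a))).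

Section Spined.
Variables (L R S0 : Type) (mulL : L -> L -> L) (mulR : R -> R -> R)
  (iL : S0 -> L) (iR : S0 -> R) (barL : L -> S0) (barR : R -> S0).

Definition LR := { p : L * R | barL (fst p) = barR (snd p) }.

Definition LR_first (p q : LR) : L := mulL (fst (proj1_sig p)) (iL (barL (fst (proj1_sig q)))).
Definition LR_second (p q : LR) : R := mulR (iR (barR (snd (proj1_sig p)))) (snd (proj1_sig q)).

Definition LR_closed : Prop :=
  forall p q : LR, barL (LR_first p q) = barR (LR_second p q).

(* the multiplication; the fallback branch is never used once LR_closed holds *)
Definition mulLR (p q : LR) : LR :=
  match excluded_middle_informative (barL (LR_first p q) = barR (LR_second p q)) with
  | left h => exist _ (LR_first p q, LR_second p q) h
  | right _ => p
  end.

End Spined.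
Arguments mulLR [L R S0] mulL mulR iL iR barL barR p q.

(* In L |x| R the product only sees the bars of the inner factors, so (x,a) |-> xbar is a
   morphism onto S0, and S0 sits in L |x| R diagonally as u |-> (u,u).  Left adequacy of L
   lets every x be written x = e xbar with e an idempotent L-related to xbar^+, and dually
   a = abar h in R; then (x,a) = (e, xbar^+) (xbar, xbar) (xbar^*, h), which exhibits the
   diagonal as an admissible quasi-ideal adequate transversal, the R*- and L*-classes of
   L |x| R being computed coordinatewise from those of L and R.

   Conversely, given S with an admissible quasi-ideal adequate transversal S0, take
   L = S S0 and R = S0 S.  Writing x = e xbar f and y = g ybar h, admissibility forces
   xbar f g ybar = xbar ybar, and this is exactly what makes x |-> (x xbar^*, xbar^+ x)
   multiplicative; it is bijective onto L |x| R because (e s q, p s h) comes from e s h. *)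

From Stdlib Require Import ClassicalDescription ProofIrrelevance IndefiniteDescription.

Set Implicit Arguments.
Unset Strict Implicit.

Lemma in1_full (T : Type) (x : option T) : in1 (@full T) x.
Proof. destruct x; exact I. Qed.

Lemma image_self (A B : Type) (f : A -> B) a : image f (f a).
Proof. exists a; reflexivity. Qed.

(** * Star relations and Green's relations on idempotents *)

Section Semigroup.
Variables (T : Type) (mul : T -> T -> T).

Lemma RstarIn_refl P a : RstarIn mul P a a.
Proof. intros x y _ _; tauto. Qed.
Lemma RstarIn_sym P a b : RstarIn mul P a b -> RstarIn mul P b a.
Proof. intros H x y Hx Hy; specialize (H x y Hx Hy); tauto. Qed.
Lemma RstarIn_trans P a b c :
  RstarIn mul P a b -> RstarIn mul P b c -> RstarIn mul P a c.
Proof. intros H1 H2 x y Hx Hy; specialize (H1 x y Hx Hy); specialize (H2 x y Hx Hy); tauto. Qed.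
Lemma LstarIn_refl P a : LstarIn mul P a a.
Proof. intros x y _ _; tauto. Qed.
Lemma LstarIn_sym P a b : LstarIn mul P a b -> LstarIn mul P b a.
Proof. intros H x y Hx Hy; specialize (H x y Hx Hy); tauto. Qed.
Lemma LstarIn_trans P a b c :
  LstarIn mul P a b -> LstarIn mul P b c -> LstarIn mul P a c.
Proof. intros H1 H2 x y Hx Hy; specialize (H1 x y Hx Hy); specialize (H2 x y Hx Hy); tauto. Qed.

Lemma Rstar_RstarIn P a b : Rstar mul a b -> RstarIn mul P a b.
Proof. intros H x y _ _; apply H; apply in1_full. Qed.
Lemma Lstar_LstarIn P a b : Lstar mul a b -> LstarIn mul P a b.
Proof. intros H x y _ _; apply H; apply in1_full. Qed.

Lemma Rstar_cancel a b x y : Rstar mul a b -> mul x a = mul y a -> mul x b = mul y b.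
Proof. intros H. exact (proj1 (H (Some x) (Some y) I I)). Qed.
Lemma Lstar_cancel a b x y : Lstar mul a b -> mul a x = mul a y -> mul b x = mul b y.
Proof. intros H. exact (proj1 (H (Some x) (Some y) I I)). Qed.

Lemma RstarIn_idem_mul P a e :
  P e -> idempotent mul e -> RstarIn mul P a e -> mul e a = a.
Proof. intros Pe Ie H. exact (proj2 (H (Some e) None Pe I) Ie). Qed.
Lemma LstarIn_idem_mul P a f :
  P f -> idempotent mul f -> LstarIn mul P a f -> mul a f = a.
Proof. intros Pf If H. exact (proj2 (H (Some f) None Pf I) If). Qed.

Lemma RstarIn_idem_eq P e f : idempotents_commute_in mul P ->
  P e -> P f -> idempotent mul e -> idempotent mul f -> RstarIn mul P e f -> e = f.
Proof.
  intros Hc Pe Pf Ie If H.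
  assert (Efe : mul f e = e) by exact (RstarIn_idem_mul Pf If H).
  assert (Eef : mul e f = f) by exact (RstarIn_idem_mul Pe Ie (RstarIn_sym H)).
  transitivity (mul f e); [symmetry; exact Efe|]. rewrite <- (Hc e f); auto.
Qed.
Lemma LstarIn_idem_eq P e f : idempotents_commute_in mul P ->
  P e -> P f -> idempotent mul e -> idempotent mul f -> LstarIn mul P e f -> e = f.
Proof.
  intros Hc Pe Pf Ie If H.
  assert (Eef : mul e f = e) by exact (LstarIn_idem_mul Pf If H).
  assert (Efe : mul f e = f) by exact (LstarIn_idem_mul Pe Ie (LstarIn_sym H)).
  transitivity (mul e f); [symmetry; exact Eef|]. rewrite (Hc e f); auto.
Qed.

Lemma GreenL_idem_intro e p : mul e p = e -> mul p e = p -> GreenL mul e p.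
Proof. intros H1 H2. exists (Some e), (Some p); simpl; auto. Qed.
Lemma GreenR_idem_intro f q : mul q f = f -> mul f q = q -> GreenR mul f q.
Proof. intros H1 H2. exists (Some f), (Some q); simpl; auto. Qed.

Hypothesis assoc : associative mul.

Lemma lmul1_mulr u a b : lmul1 mul u (mul a b) = mul (lmul1 mul u a) b.
Proof. destruct u; simpl; auto. Qed.
Lemma rmul1_mull a b u : rmul1 mul (mul a b) u = mul a (rmul1 mul b u).
Proof. destruct u; simpl; auto. Qed.
Lemma lmul1_rmul1 u a v : lmul1 mul u (rmul1 mul a v) = rmul1 mul (lmul1 mul u a) v.
Proof. destruct u, v; simpl; auto. Qed.

Lemma GreenL_idem_mul e p : idempotent mul e -> idempotent mul p -> GreenL mul e p ->
  mul e p = e /\ mul p e = p.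
Proof.
  intros Ie Ip [x [y [Ee Ep]]]. split.
  - rewrite Ee, <- lmul1_mulr, Ip. reflexivity.
  - rewrite Ep, <- lmul1_mulr, Ie. reflexivity.
Qed.
Lemma GreenR_idem_mul f q : idempotent mul f -> idempotent mul q -> GreenR mul f q ->
  mul q f = f /\ mul f q = q.
Proof.
  intros If Iq [x [y [Ef Eq]]]. split.
  - rewrite Ef, <- rmul1_mull, Iq. reflexivity.
  - rewrite Eq, <- rmul1_mull, If. reflexivity.
Qed.

Lemma GreenL_idem_eq e p : mul e p = mul p e ->
  idempotent mul e -> idempotent mul p -> GreenL mul e p -> e = p.
Proof.
  intros C Ie Ip G. destruct (GreenL_idem_mul Ie Ip G) as [E1 E2].
  rewrite <- E1, C, E2. reflexivity.
Qed.
Lemma GreenR_idem_eq f q : mul f q = mul q f ->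
  idempotent mul f -> idempotent mul q -> GreenR mul f q -> f = q.
Proof.
  intros C If Iq G. destruct (GreenR_idem_mul If Iq G) as [E1 E2].
  rewrite <- E1, <- C, E2. reflexivity.
Qed.

Lemma GreenR_Rstar a b : GreenR mul a b -> Rstar mul a b.
Proof.
  intros [x [y [Ea Eb]]] u v _ _. split; intro E.
  - rewrite Eb, !lmul1_rmul1, E. reflexivity.
  - rewrite Ea, !lmul1_rmul1, E. reflexivity.
Qed.
Lemma GreenL_Lstar a b : GreenL mul a b -> Lstar mul a b.
Proof.
  intros [x [y [Ea Eb]]] u v _ _. split; intro E.
  - rewrite Eb, <- !lmul1_rmul1, E. reflexivity.
  - rewrite Ea, <- !lmul1_rmul1, E. reflexivity.
Qed.

Lemma left_adequate_GreenR_eq f q : left_adequate mul ->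
  idempotent mul f -> idempotent mul q -> GreenR mul f q -> f = q.
Proof.
  intros [_ Hu] If Iq G.
  apply (Hu f f q If Iq); [apply RstarIn_refl | exact (GreenR_Rstar G)].
Qed.
Lemma right_adequate_GreenL_eq e p : right_adequate mul ->
  idempotent mul e -> idempotent mul p -> GreenL mul e p -> e = p.
Proof.
  intros [_ Hu] Ie Ip G.
  apply (Hu e e p Ie Ip); [apply LstarIn_refl | exact (GreenL_Lstar G)].
Qed.

Lemma idempotent_mul_comm e f : mul e f = mul f e ->
  idempotent mul e -> idempotent mul f -> idempotent mul (mul e f).
Proof.
  intros C Ie If. unfold idempotent.
  rewrite <- assoc, (assoc f e f), <- C, <- (assoc e f f), If, assoc, Ie. reflexivity.
Qed.

Lemma GreenL_idem_absorb e p p' :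
  idempotent mul e -> idempotent mul p -> GreenL mul e p -> mul p' p = p' -> mul p' e = p'.
Proof.
  intros Ie Ip G H. transitivity (mul (mul p' p) e); [rewrite H; reflexivity|].
  rewrite <- assoc, (proj2 (GreenL_idem_mul Ie Ip G)). exact H.
Qed.
Lemma GreenR_idem_absorb f q q' :
  idempotent mul f -> idempotent mul q -> GreenR mul f q -> mul q q' = q' -> mul f q' = q'.
Proof.
  intros If Iq G H. transitivity (mul f (mul q q')); [rewrite H; reflexivity|].
  rewrite assoc, (proj2 (GreenR_idem_mul If Iq G)). exact H.
Qed.

Lemma GreenL_idem_restrict e p p' :
  idempotent mul e -> idempotent mul p -> GreenL mul e p ->
  idempotent mul p' -> mul p' p = p' ->
  idempotent mul (mul e p') /\ GreenL mul (mul e p') p'.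
Proof.
  intros Ie Ip G Ip' H. pose proof (GreenL_idem_absorb Ie Ip G H) as E.
  split.
  - unfold idempotent. rewrite <- assoc, (assoc p' e p'), E, Ip'. reflexivity.
  - apply GreenL_idem_intro.
    + rewrite <- assoc, Ip'. reflexivity.
    + rewrite assoc, E, Ip'. reflexivity.
Qed.
Lemma GreenR_idem_restrict f q q' :
  idempotent mul f -> idempotent mul q -> GreenR mul f q ->
  idempotent mul q' -> mul q q' = q' ->
  idempotent mul (mul q' f) /\ GreenR mul (mul q' f) q'.
Proof.
  intros If Iq G Iq' H. pose proof (GreenR_idem_absorb If Iq G H) as E.
  split.
  - unfold idempotent. rewrite <- assoc, (assoc f q' f), E, assoc, Iq'. reflexivity.
  - apply GreenR_idem_intro.
    + rewrite assoc, Iq'. reflexivity.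
    + rewrite <- assoc, E, Iq'. reflexivity.
Qed.

End Semigroup.

Section Morphism.
Variables (A B : Type) (mA : A -> A -> A) (mB : B -> B -> B) (m : A -> B).
Hypothesis m_morph : morphism mA mB m.

Lemma idempotent_morph a : idempotent mA a -> idempotent mB (m a).
Proof. unfold idempotent. intros H. rewrite <- m_morph, H. reflexivity. Qed.

Lemma lmul1_morph x a : lmul1 mB (option_map m x) (m a) = m (lmul1 mA x a).
Proof. destruct x; simpl; auto. Qed.
Lemma rmul1_morph a x : rmul1 mB (m a) (option_map m x) = m (rmul1 mA a x).
Proof. destruct x; simpl; auto. Qed.

Lemma GreenL_morph a b : GreenL mA a b -> GreenL mB (m a) (m b).
Proof.
  intros [x [y [Ea Eb]]]. exists (option_map m x), (option_map m y).
  rewrite !lmul1_morph, <- Ea, <- Eb. auto.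
Qed.
Lemma GreenR_morph a b : GreenR mA a b -> GreenR mB (m a) (m b).
Proof.
  intros [x [y [Ea Eb]]]. exists (option_map m x), (option_map m y).
  rewrite !rmul1_morph, <- Ea, <- Eb. auto.
Qed.

End Morphism.

Section Embedding.
Variables (A B : Type) (mA : A -> A -> A) (mB : B -> B -> B) (i : A -> B).
Hypotheses (i_inj : injective i) (i_morph : morphism mA mB i).


Lemma in1_image_map x : in1 (image i) (option_map i x).
Proof. destruct x as [a|]; simpl; [exists a|]; auto. Qed.
Lemma in1_image_inv y : in1 (image i) y -> exists x, y = option_map i x.
Proof.
  destruct y as [b|]; simpl.
  - intros [a ->]. exists (Some a); reflexivity.
  - intros _. exists None; reflexivity.
Qed.

Let i_eq a b : i a = i b <-> a = b.
Proof. split; [apply i_inj | intros ->; reflexivity]. Qed.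

Lemma RstarIn_image u v : RstarIn mB (image i) (i u) (i v) <-> Rstar mA u v.
Proof.
  split.
  - intros H x y _ _. pose proof (H _ _ (in1_image_map x) (in1_image_map y)) as H'.
    rewrite !(lmul1_morph i_morph), !i_eq in H'. exact H'.
  - intros H x y Hx Hy.
    destruct (in1_image_inv Hx) as [x' ->], (in1_image_inv Hy) as [y' ->].
    rewrite !(lmul1_morph i_morph), !i_eq. apply H; apply in1_full.
Qed.
Lemma LstarIn_image u v : LstarIn mB (image i) (i u) (i v) <-> Lstar mA u v.
Proof.
  split.
  - intros H x y _ _. pose proof (H _ _ (in1_image_map x) (in1_image_map y)) as H'.
    rewrite !(rmul1_morph i_morph), !i_eq in H'. exact H'.
  - intros H x y Hx Hy.
    destruct (in1_image_inv Hx) as [x' ->], (in1_image_inv Hy) as [y' ->].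
    rewrite !(rmul1_morph i_morph), !i_eq. apply H; apply in1_full.
Qed.

Lemma idempotent_image u : idempotent mB (i u) <-> idempotent mA u.
Proof. unfold idempotent. rewrite <- i_morph. apply i_eq. Qed.

Lemma is_plus_image u w : is_plus mB (image i) (i u) (i w) <-> idempotent mA w /\ Rstar mA u w.
Proof.
  unfold is_plus. rewrite idempotent_image, RstarIn_image.
  split; [tauto | intros H; split; [apply image_self | exact H]].
Qed.
Lemma is_star_image u w : is_star mB (image i) (i u) (i w) <-> idempotent mA w /\ Lstar mA u w.
Proof.
  unfold is_star. rewrite idempotent_image, LstarIn_image.
  split; [tauto | intros H; split; [apply image_self | exact H]].
Qed.

End Embedding.

(** * Factorizations through an adequate transversal *)

Section Transversal.
Variables (T : Type) (mul : T -> T -> T) (P : T -> Prop).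
Hypotheses (assoc : associative mul)
  (HT : adequate_transversal mul P) (HQ : quasi_ideal mul P).

Lemma transversal_mul a b : P a -> P b -> P (mul a b).
Proof. apply (proj1 (proj1 HT)). Qed.
Lemma transversal_plus s : P s -> exists p, is_plus mul P s p.
Proof. intros Ps. destruct (proj1 (proj1 (proj1 (proj2 HT)) s Ps)) as [p Hp]. exists p; exact Hp. Qed.
Lemma transversal_star s : P s -> exists q, is_star mul P s q.
Proof. intros Ps. destruct (proj2 (proj1 (proj1 (proj2 HT)) s Ps)) as [q Hq]. exists q; exact Hq. Qed.
Lemma transversal_Rstar a b : P a -> P b -> RstarIn mul P a b -> Rstar mul a b.
Proof. intros Pa Pb. apply (proj2 (proj2 (proj2 (proj1 HT))) a b Pa Pb). Qed.
Lemma transversal_Lstar a b : P a -> P b -> LstarIn mul P a b -> Lstar mul a b.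
Proof. intros Pa Pb. apply (proj1 (proj2 (proj2 (proj1 HT))) a b Pa Pb). Qed.
Lemma transversal_idem_comm : idempotents_commute_in mul P.
Proof. exact (proj2 (proj1 (proj2 HT))). Qed.

Lemma bar_exists x : exists s, is_bar mul P x s.
Proof. destruct (proj2 (proj2 HT) x) as [s [Hs _]]. exists s; exact Hs. Qed.
Lemma bar_unique x s s' : is_bar mul P x s -> is_bar mul P x s' -> s = s'.
Proof.
  intros H H'. destruct (proj2 (proj2 HT) x) as [s0 [_ U]].
  rewrite <- (U s H), <- (U s' H'). reflexivity.
Qed.

Lemma plus_unique s p p' : is_plus mul P s p -> is_plus mul P s p' -> p = p'.
Proof.
  intros [Pp [Ip Hp]] [Pp' [Ip' Hp']].
  exact (RstarIn_idem_eq transversal_idem_comm Pp Pp' Ip Ip'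
           (RstarIn_trans (RstarIn_sym Hp) Hp')).
Qed.
Lemma star_unique s q q' : is_star mul P s q -> is_star mul P s q' -> q = q'.
Proof.
  intros [Pq [Iq Hq]] [Pq' [Iq' Hq']].
  exact (LstarIn_idem_eq transversal_idem_comm Pq Pq' Iq Iq'
           (LstarIn_trans (LstarIn_sym Hq) Hq')).
Qed.

Lemma is_plus_mul s p : is_plus mul P s p -> mul p s = s.
Proof. intros [Pp [Ip Hp]]. exact (RstarIn_idem_mul Pp Ip Hp). Qed.
Lemma is_star_mul s q : is_star mul P s q -> mul s q = s.
Proof. intros [Pq [Iq Hq]]. exact (LstarIn_idem_mul Pq Iq Hq). Qed.

Lemma is_plus_below u p p' : P p -> idempotent mul p -> mul p u = u ->
  is_plus mul P u p' -> mul p p' = p' /\ mul p' p = p'.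
Proof.
  intros Pp Ip Hpu [Pp' [Ip' Hp']].
  assert (E : mul p p' = p') by exact (proj1 (Hp' (Some p) None Pp I) Hpu).
  split; [exact E|]. rewrite <- (transversal_idem_comm Pp Pp' Ip Ip'). exact E.
Qed.
Lemma is_star_below u q q' : P q -> idempotent mul q -> mul u q = u ->
  is_star mul P u q' -> mul q' q = q' /\ mul q q' = q'.
Proof.
  intros Pq Iq Huq [Pq' [Iq' Hq']].
  assert (E : mul q' q = q') by exact (proj1 (Hq' (Some q) None Pq I) Huq).
  split; [exact E|]. rewrite (transversal_idem_comm Pq Pq' Iq Iq'). exact E.
Qed.

Record bar_factor (x e s f p q : T) : Prop := BarFactor {
  bf_transversal : P s;
  bf_idem_l : idempotent mul e;
  bf_idem_r : idempotent mul f;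
  bf_eq : x = mul (mul e s) f;
  bf_plus : is_plus mul P s p;
  bf_GreenL : GreenL mul e p;
  bf_star : is_star mul P s q;
  bf_GreenR : GreenR mul f q }.

Lemma is_bar_factor x s : is_bar mul P x s <-> exists e f p q, bar_factor x e s f p q.
Proof.
  split.
  - intros [Ps [e [f [Ie [If [E [[p [Hp G1]] [q [Hq G2]]]]]]]]].
    exists e, f, p, q. constructor; auto.
  - intros [e [f [p [q [Ps Ie If E Hp G1 Hq G2]]]]].
    split; [exact Ps|]. exists e, f. repeat split; auto; [exists p | exists q]; auto.
Qed.

Section Factor.
Variables (x e s f p q : T).
Hypothesis D : bar_factor x e s f p q.

Lemma bar_factor_is_bar : is_bar mul P x s.
Proof. apply is_bar_factor. exists e, f, p, q. exact D. Qed.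
Lemma bar_factor_plus_P : P p.
Proof. exact (proj1 (bf_plus D)). Qed.
Lemma bar_factor_star_P : P q.
Proof. exact (proj1 (bf_star D)). Qed.
Lemma bar_factor_plus_idem : idempotent mul p.
Proof. exact (proj1 (proj2 (bf_plus D))). Qed.
Lemma bar_factor_star_idem : idempotent mul q.
Proof. exact (proj1 (proj2 (bf_star D))). Qed.
Lemma bar_factor_ep : mul e p = e.
Proof. exact (proj1 (GreenL_idem_mul assoc (bf_idem_l D) bar_factor_plus_idem (bf_GreenL D))). Qed.
Lemma bar_factor_pe : mul p e = p.
Proof. exact (proj2 (GreenL_idem_mul assoc (bf_idem_l D) bar_factor_plus_idem (bf_GreenL D))). Qed.
Lemma bar_factor_qf : mul q f = f.
Proof. exact (proj1 (GreenR_idem_mul assoc (bf_idem_r D) bar_factor_star_idem (bf_GreenR D))). Qed.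
Lemma bar_factor_fq : mul f q = q.
Proof. exact (proj2 (GreenR_idem_mul assoc (bf_idem_r D) bar_factor_star_idem (bf_GreenR D))). Qed.
Lemma bar_factor_ps : mul p s = s.
Proof. exact (is_plus_mul (bf_plus D)). Qed.
Lemma bar_factor_sq : mul s q = s.
Proof. exact (is_star_mul (bf_star D)). Qed.

Lemma bar_factor_Rstar : Rstar mul x e.
Proof.
  destruct D as [Ps Ie If Ex [Pp [Ip Hp]] G1 Hq G2].
  assert (Rs : Rstar mul s p) by (apply transversal_Rstar; auto).
  intros u v _ _. split; intro H.
  - rewrite Ex, !lmul1_mulr in H by exact assoc.
    apply (f_equal (fun z => mul z q)) in H.
    rewrite <- !assoc, bar_factor_fq, bar_factor_sq in H.
    apply (Rstar_cancel Rs) in H. rewrite <- !lmul1_mulr, bar_factor_ep in H by exact assoc.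
    exact H.
  - rewrite Ex, !lmul1_mulr, H by exact assoc. reflexivity.
Qed.
Lemma bar_factor_Lstar : Lstar mul x f.
Proof.
  destruct D as [Ps Ie If Ex Hp G1 [Pq [Iq Hq]] G2].
  assert (Ls : Lstar mul s q) by (apply transversal_Lstar; auto).
  intros u v _ _. split; intro H.
  - rewrite Ex, !rmul1_mull in H by exact assoc.
    apply (f_equal (fun z => mul p z)) in H.
    rewrite !assoc, bar_factor_pe, bar_factor_ps in H.
    apply (Lstar_cancel Ls) in H. rewrite <- !rmul1_mull, bar_factor_qf in H by exact assoc.
    exact H.
  - rewrite Ex, !rmul1_mull, H by exact assoc. reflexivity.
Qed.

End Factor.

Lemma transversal_mul_GreenR_GreenL f q g p :
  idempotent mul f -> idempotent mul q -> P q -> GreenR mul f q ->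
  idempotent mul g -> idempotent mul p -> P p -> GreenL mul g p -> P (mul f g).
Proof.
  intros If Iq Pq Gf Ig Ip Pp Gg.
  replace (mul f g) with (mul (mul q (mul f g)) p); [apply HQ; auto|].
  rewrite assoc, (proj1 (GreenR_idem_mul assoc If Iq Gf)), <- assoc,
    (proj1 (GreenL_idem_mul assoc Ig Ip Gg)).
  reflexivity.
Qed.

Lemma bar_factor_mul x e s f p q y g t h p2 q2 :
  bar_factor x e s f p q -> bar_factor y g t h p2 q2 ->
  exists p' q', bar_factor (mul x y) (mul e p') (mul (mul s (mul f g)) t) (mul q' h) p' q'.
Proof.
  intros D1 D2.
  set (u := mul (mul s (mul f g)) t).
  assert (Pu : P u).
  { apply transversal_mul; [apply transversal_mul|]; try apply (bf_transversal D1);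
      try apply (bf_transversal D2).
    apply (transversal_mul_GreenR_GreenL (bf_idem_r D1) (bar_factor_star_idem D1)
             (bar_factor_star_P D1) (bf_GreenR D1) (bf_idem_l D2) (bar_factor_plus_idem D2)
             (bar_factor_plus_P D2) (bf_GreenL D2)). }
  destruct (transversal_plus Pu) as [p' Hp'], (transversal_star Pu) as [q' Hq'].
  assert (Hpu : mul p u = u) by (unfold u; rewrite !assoc, (bar_factor_ps D1); reflexivity).
  assert (Huq : mul u q2 = u) by (unfold u; rewrite <- assoc, (bar_factor_sq D2); reflexivity).
  destruct (is_plus_below (bar_factor_plus_P D1) (bar_factor_plus_idem D1) Hpu Hp') as [_ Ep'].
  destruct (is_star_below (bar_factor_star_P D2) (bar_factor_star_idem D2) Huq Hq') as [_ Eq'].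
  pose proof Hp' as [_ [Ip' _]]. pose proof Hq' as [_ [Iq' _]].
  destruct (GreenL_idem_restrict assoc (bf_idem_l D1) (bar_factor_plus_idem D1)
              (bf_GreenL D1) Ip' Ep') as [Ie' Ge'].
  destruct (GreenR_idem_restrict assoc (bf_idem_r D2) (bar_factor_star_idem D2)
              (bf_GreenR D2) Iq' Eq') as [Ih' Gh'].
  exists p', q'. constructor; auto.
  rewrite <- (assoc e p' u), (is_plus_mul Hp'), <- (assoc e u), (assoc u q' h), (is_star_mul Hq').
  rewrite (bf_eq D1), (bf_eq D2). unfold u. rewrite <- !assoc. reflexivity.
Qed.

Lemma bar_factor_transversal s p q :
  P s -> is_plus mul P s p -> is_star mul P s q -> bar_factor s p s q p q.
Proof.
  intros Ps Hp Hq. pose proof Hp as [Pp [Ip _]]. pose proof Hq as [Pq [Iq _]].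
  constructor; auto.
  - rewrite (is_plus_mul Hp), (is_star_mul Hq). reflexivity.
  - exists None, None; simpl; auto.
  - exists None, None; simpl; auto.
Qed.

Lemma is_bar_transversal s : P s -> is_bar mul P s s.
Proof.
  intros Ps. destruct (transversal_plus Ps) as [p Hp], (transversal_star Ps) as [q Hq].
  exact (bar_factor_is_bar (bar_factor_transversal Ps Hp Hq)).
Qed.

Lemma is_plus_idem p : P p -> idempotent mul p -> is_plus mul P p p.
Proof. intros Pp Ip. split; [exact Pp | split; [exact Ip | apply RstarIn_refl]]. Qed.
Lemma is_star_idem q : P q -> idempotent mul q -> is_star mul P q q.
Proof. intros Pq Iq. split; [exact Pq | split; [exact Iq | apply LstarIn_refl]]. Qed.

Lemma bar_factor_GreenL_idem e p : idempotent mul e -> idempotent mul p -> P p ->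
  GreenL mul e p -> bar_factor e e p p p p.
Proof.
  intros Ie Ip Pp G. destruct (GreenL_idem_mul assoc Ie Ip G) as [Eep _].
  constructor; auto using is_plus_idem, is_star_idem.
  - rewrite Eep, Eep. reflexivity.
  - exists None, None; simpl; auto.
Qed.
Lemma bar_factor_GreenR_idem f q : idempotent mul f -> idempotent mul q -> P q ->
  GreenR mul f q -> bar_factor f q q f q q.
Proof.
  intros If Iq Pq G. destruct (GreenR_idem_mul assoc If Iq G) as [Eqf _].
  constructor; auto using is_plus_idem, is_star_idem.
  - rewrite Iq, Eqf. reflexivity.
  - exists None, None; simpl; auto.
Qed.

End Transversal.

Arguments is_bar_factor {T mul P x s}.

Section ImageTransversal.
Variables (A B : Type) (mA : A -> A -> A) (mB : B -> B -> B) (i : A -> B).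
Hypotheses (i_inj : injective i) (i_morph : morphism mA mB i)
  (HT : adequate_transversal mB (image i)).

Lemma image_transversal_Rstar u v : Rstar mA u v -> Rstar mB (i u) (i v).
Proof.
  intros H. apply (transversal_Rstar HT (image_self i u) (image_self i v)).
  apply (RstarIn_image i_inj i_morph). exact H.
Qed.
Lemma image_transversal_Lstar u v : Lstar mA u v -> Lstar mB (i u) (i v).
Proof.
  intros H. apply (transversal_Lstar HT (image_self i u) (image_self i v)).
  apply (LstarIn_image i_inj i_morph). exact H.
Qed.

Lemma image_transversal_plus u : exists w, idempotent mA w /\ Rstar mA u w.
Proof.
  destruct (transversal_plus HT (image_self i u)) as [p Hp].
  destruct (proj1 Hp) as [w ->]. exists w. apply (is_plus_image i_inj i_morph). exact Hp.
Qed.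
Lemma image_transversal_star u : exists w, idempotent mA w /\ Lstar mA u w.
Proof.
  destruct (transversal_star HT (image_self i u)) as [q Hq].
  destruct (proj1 Hq) as [w ->]. exists w. apply (is_star_image i_inj i_morph). exact Hq.
Qed.

Lemma image_transversal_idem_comm : idempotents_commute_in mA (@full A).
Proof.
  intros e f _ _ Ie If. apply i_inj. rewrite !i_morph.
  apply (transversal_idem_comm HT); try apply image_self;
    apply (idempotent_image i_inj i_morph); assumption.
Qed.

End ImageTransversal.

(** * The spined product L |x| R *)

Section SpinedProduct.
Variables (L R S0 : Type) (mulL : L -> L -> L) (mulR : R -> R -> R)
  (iL : S0 -> L) (iR : S0 -> R) (barL : L -> S0) (barR : R -> S0).

Local Notation LRt := (LR barL barR).
Local Notation mLR := (mulLR mulL mulR iL iR barL barR).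

Definition LR_fst (p : LRt) : L := fst (proj1_sig p).
Definition LR_snd (p : LRt) : R := snd (proj1_sig p).
Definition LR_bar (p : LRt) : S0 := barL (LR_fst p).

Lemma LR_bar_snd p : LR_bar p = barR (LR_snd p).
Proof. destruct p as [[x a] h]; exact h. Qed.

Lemma LR_eq_iff p q : p = q <-> LR_fst p = LR_fst q /\ LR_snd p = LR_snd q.
Proof.
  split; [intros ->; auto|].
  destruct p as [[x a] h], q as [[y b] k]; unfold LR_fst, LR_snd; simpl.
  intros [-> ->]. f_equal. apply proof_irrelevance.
Qed.
Lemma LR_eq p q : LR_fst p = LR_fst q -> LR_snd p = LR_snd q -> p = q.
Proof. intros E1 E2. apply LR_eq_iff; auto. Qed.

Hypothesis closed : LR_closed mulL mulR iL iR barL barR.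

Lemma mulLR_fst p q : LR_fst (mLR p q) = mulL (LR_fst p) (iL (LR_bar q)).
Proof.
  unfold mulLR. destruct (excluded_middle_informative _) as [h|n]; [reflexivity|].
  exfalso; apply n, closed.
Qed.
Lemma mulLR_snd p q : LR_snd (mLR p q) = mulR (iR (LR_bar p)) (LR_snd q).
Proof.
  unfold mulLR. rewrite LR_bar_snd.
  destruct (excluded_middle_informative _) as [h|n]; [reflexivity|].
  exfalso; apply n, closed.
Qed.

(* On the first coordinate only the bar of the left factor acts; [c] absorbs the
   case of the adjoined identity. *)
Lemma Rstar_LR p p' (c : option L) :
  LR_fst p = lmul1 mulL c (iL (LR_bar p)) -> LR_fst p' = lmul1 mulL c (iL (LR_bar p')) ->
  Rstar mulL (iL (LR_bar p)) (iL (LR_bar p')) -> Rstar mulR (LR_snd p) (LR_snd p') ->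
  Rstar mLR p p'.
Proof.
  intros Ep Ep' HL HR X Y _ _.
  set (lead Z := match Z with Some z => Some (LR_fst z) | None => c end).
  assert (Kfst : forall Z r, LR_fst r = lmul1 mulL c (iL (LR_bar r)) ->
            LR_fst (lmul1 mLR Z r) = lmul1 mulL (lead Z) (iL (LR_bar r))).
  { intros [z|] r Er; simpl; [apply mulLR_fst | exact Er]. }
  assert (Ksnd : forall Z r, LR_snd (lmul1 mLR Z r)
            = lmul1 mulR (option_map (fun z => iR (LR_bar z)) Z) (LR_snd r)).
  { intros [z|] r; simpl; [apply mulLR_snd | reflexivity]. }
  rewrite !LR_eq_iff, (Kfst X p), (Kfst Y p), (Kfst X p'), (Kfst Y p'), !Ksnd by assumption.
  destruct (HL (lead X) (lead Y) (in1_full _) (in1_full _)),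
    (HR (option_map (fun z => iR (LR_bar z)) X) (option_map (fun z => iR (LR_bar z)) Y)
        (in1_full _) (in1_full _)).
  tauto.
Qed.
Lemma Lstar_LR p p' (c : option R) :
  LR_snd p = rmul1 mulR (iR (LR_bar p)) c -> LR_snd p' = rmul1 mulR (iR (LR_bar p')) c ->
  Lstar mulR (iR (LR_bar p)) (iR (LR_bar p')) -> Lstar mulL (LR_fst p) (LR_fst p') ->
  Lstar mLR p p'.
Proof.
  intros Ep Ep' HR HL X Y _ _.
  set (trail Z := match Z with Some z => Some (LR_snd z) | None => c end).
  assert (Ksnd : forall Z r, LR_snd r = rmul1 mulR (iR (LR_bar r)) c ->
            LR_snd (rmul1 mLR r Z) = rmul1 mulR (iR (LR_bar r)) (trail Z)).
  { intros [z|] r Er; simpl; [apply mulLR_snd | exact Er]. }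
  assert (Kfst : forall Z r, LR_fst (rmul1 mLR r Z)
            = rmul1 mulL (LR_fst r) (option_map (fun z => iL (LR_bar z)) Z)).
  { intros [z|] r; simpl; [apply mulLR_fst | reflexivity]. }
  rewrite !LR_eq_iff, (Ksnd X p), (Ksnd Y p), (Ksnd X p'), (Ksnd Y p'), !Kfst by assumption.
  destruct (HR (trail X) (trail Y) (in1_full _) (in1_full _)),
    (HL (option_map (fun z => iL (LR_bar z)) X) (option_map (fun z => iL (LR_bar z)) Y)
        (in1_full _) (in1_full _)).
  tauto.
Qed.

End SpinedProduct.

Arguments LR_fst {L R S0 barL barR} p.
Arguments LR_snd {L R S0 barL barR} p.
Arguments LR_bar {L R S0 barL barR} p.

Section SpinedConstruction.
Variables (L R S0 : Type) (mulL : L -> L -> L) (mulR : R -> R -> R)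
  (mul0 : S0 -> S0 -> S0) (iL : S0 -> L) (iR : S0 -> R)
  (barL : L -> S0) (barR : R -> S0).
Hypotheses (aL : associative mulL) (aR : associative mulR) (a0 : associative mul0)
  (laL : left_adequate mulL) (raR : right_adequate mulR)
  (injL : injective iL) (morL : morphism mul0 mulL iL)
  (injR : injective iR) (morR : morphism mul0 mulR iR)
  (atL : adequate_transversal mulL (image iL)) (qiL : quasi_ideal mulL (image iL))
  (atR : adequate_transversal mulR (image iR)) (qiR : quasi_ideal mulR (image iR))
  (bL : forall x, is_bar mulL (image iL) x (iL (barL x)))
  (bR : forall a, is_bar mulR (image iR) a (iR (barR a))).

Lemma barL_iL u : barL (iL u) = u.
Proof. apply injL, (bar_unique atL (bL (iL u))), (is_bar_transversal atL), image_self. Qed.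
Lemma barR_iR u : barR (iR u) = u.
Proof. apply injR, (bar_unique atR (bR (iR u))), (is_bar_transversal atR), image_self. Qed.

Definition plus0 (u : S0) : S0 :=
  proj1_sig (constructive_indefinite_description _ (image_transversal_plus injL morL atL u)).
Definition star0 (u : S0) : S0 :=
  proj1_sig (constructive_indefinite_description _ (image_transversal_star injL morL atL u)).

Lemma plus0_spec u : idempotent mul0 (plus0 u) /\ Rstar mul0 u (plus0 u).
Proof. unfold plus0. destruct (constructive_indefinite_description _ _) as [w Hw]. exact Hw. Qed.
Lemma star0_spec u : idempotent mul0 (star0 u) /\ Lstar mul0 u (star0 u).
Proof. unfold star0. destruct (constructive_indefinite_description _ _) as [w Hw]. exact Hw. Qed.
Lemma plus0_mul u : mul0 (plus0 u) u = u.
Proof. exact (RstarIn_idem_mul (P := @full S0) I (proj1 (plus0_spec u)) (proj2 (plus0_spec u))). Qed.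

Lemma S0_idem_comm : idempotents_commute_in mul0 (@full S0).
Proof. exact (image_transversal_idem_comm injL morL atL). Qed.

Lemma is_plus_iL u : is_plus mulL (image iL) (iL u) (iL (plus0 u)).
Proof. apply (is_plus_image injL morL), plus0_spec. Qed.
Lemma is_star_iL u : is_star mulL (image iL) (iL u) (iL (star0 u)).
Proof. apply (is_star_image injL morL), star0_spec. Qed.
Lemma is_plus_iR u : is_plus mulR (image iR) (iR u) (iR (plus0 u)).
Proof. apply (is_plus_image injR morR), plus0_spec. Qed.
Lemma is_star_iR u : is_star mulR (image iR) (iR u) (iR (star0 u)).
Proof. apply (is_star_image injR morR), star0_spec. Qed.

(* Left adequacy forces the right idempotent of the factorization to be [xbar^*]. *)
Lemma L_bar_factor x : exists e, bar_factor mulL (image iL) x e (iL (barL x))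
  (iL (star0 (barL x))) (iL (plus0 (barL x))) (iL (star0 (barL x))).
Proof.
  destruct (proj1 is_bar_factor (bL x)) as [e [f [p [q D]]]].
  rewrite <- (plus_unique atL (bf_plus D) (is_plus_iL _)),
    <- (star_unique atL (bf_star D) (is_star_iL _)).
  rewrite (left_adequate_GreenR_eq aL laL (bf_idem_r D) (bar_factor_star_idem D) (bf_GreenR D)) in D.
  exists e; exact D.
Qed.
Lemma R_bar_factor a : exists h, bar_factor mulR (image iR) a (iR (plus0 (barR a)))
  (iR (barR a)) h (iR (plus0 (barR a))) (iR (star0 (barR a))).
Proof.
  destruct (proj1 is_bar_factor (bR a)) as [e [f [p [q D]]]].
  rewrite <- (plus_unique atR (bf_plus D) (is_plus_iR _)),
    <- (star_unique atR (bf_star D) (is_star_iR _)).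
  rewrite (right_adequate_GreenL_eq aR raR (bf_idem_l D) (bar_factor_plus_idem D) (bf_GreenL D)) in D.
  exists f; exact D.
Qed.

Lemma barL_GreenL_idem e w : idempotent mulL e -> idempotent mul0 w ->
  GreenL mulL e (iL w) -> barL e = w.
Proof.
  intros Ie Iw G. apply injL, (bar_unique atL (bL e)).
  exact (bar_factor_is_bar (bar_factor_GreenL_idem aL Ie
    (proj2 (idempotent_image injL morL w) Iw) (image_self iL w) G)).
Qed.
Lemma barR_GreenR_idem h w : idempotent mulR h -> idempotent mul0 w ->
  GreenR mulR h (iR w) -> barR h = w.
Proof.
  intros Ih Iw G. apply injR, (bar_unique atR (bR h)).
  exact (bar_factor_is_bar (bar_factor_GreenR_idem aR Ih
    (proj2 (idempotent_image injR morR w) Iw) (image_self iR w) G)).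
Qed.

Lemma L_decomp x : exists e, barL e = plus0 (barL x) /\
  mulL e (iL (plus0 (barL x))) = e /\ x = mulL e (iL (barL x)) /\ Rstar mulL x e.
Proof.
  destruct (L_bar_factor x) as [e D]. exists e. split; [|split; [|split]].
  - exact (barL_GreenL_idem (bf_idem_l D) (proj1 (plus0_spec _)) (bf_GreenL D)).
  - exact (bar_factor_ep aL D).
  - rewrite (bf_eq D) at 1. rewrite <- aL, (bar_factor_sq D). reflexivity.
  - exact (bar_factor_Rstar aL atL D).
Qed.
Lemma R_decomp a : exists h, barR h = star0 (barR a) /\
  mulR (iR (star0 (barR a))) h = h /\ a = mulR (iR (barR a)) h /\ Lstar mulR a h.
Proof.
  destruct (R_bar_factor a) as [h D]. exists h. split; [|split; [|split]].
  - exact (barR_GreenR_idem (bf_idem_r D) (proj1 (star0_spec _)) (bf_GreenR D)).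
  - exact (bar_factor_qf aR D).
  - rewrite (bf_eq D) at 1. rewrite (bar_factor_ps D). reflexivity.
  - exact (bar_factor_Lstar aR atR D).
Qed.

Lemma L_Lstar_star0 x : Lstar mulL x (iL (star0 (barL x))).
Proof. destruct (L_bar_factor x) as [e D]. exact (bar_factor_Lstar aL atL D). Qed.
Lemma R_Rstar_plus0 a : Rstar mulR a (iR (plus0 (barR a))).
Proof. destruct (R_bar_factor a) as [h D]. exact (bar_factor_Rstar aR atR D). Qed.

Lemma mulL_iL_star0 x : mulL x (iL (star0 (barL x))) = x.
Proof.
  apply (LstarIn_idem_mul (P := @full L) I), L_Lstar_star0.
  apply (idempotent_image injL morL), star0_spec.
Qed.

Lemma mulL_iL_barL_idem x : idempotent mul0 (barL x) -> mulL x (iL (barL x)) = x.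
Proof.
  intros I. destruct (L_decomp x) as [e [_ [_ [Ex _]]]].
  transitivity (mulL (mulL e (iL (barL x))) (iL (barL x))); [rewrite <- Ex; reflexivity|].
  rewrite <- aL, <- morL, I. symmetry; exact Ex.
Qed.
Lemma mulR_iR_barR_idem a : idempotent mul0 (barR a) -> mulR (iR (barR a)) a = a.
Proof.
  intros I. destruct (R_decomp a) as [h [_ [_ [Ea _]]]].
  transitivity (mulR (iR (barR a)) (mulR (iR (barR a)) h)); [rewrite <- Ea; reflexivity|].
  rewrite aR, <- morR, I. symmetry; exact Ea.
Qed.

Lemma barL_mul_iL x u : barL (mulL x (iL u)) = mul0 (barL x) u.
Proof.
  destruct (L_bar_factor x) as [e D].
  pose proof (bar_factor_transversal (image_self iL u) (is_plus_iL u) (is_star_iL u)) as D2.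
  destruct (bar_factor_mul aL atL qiL D D2) as [p' [q' D3]].
  rewrite (aL _ (iL (star0 (barL x)))), (bar_factor_sq D), <- aL, (bar_factor_ps D2) in D3.
  apply injL, (bar_unique atL (bL _)). rewrite morL. exact (bar_factor_is_bar D3).
Qed.
Lemma barR_iR_mul u a : barR (mulR (iR u) a) = mul0 u (barR a).
Proof.
  destruct (R_bar_factor a) as [h D].
  pose proof (bar_factor_transversal (image_self iR u) (is_plus_iR u) (is_star_iR u)) as D2.
  destruct (bar_factor_mul aR atR qiR D2 D) as [p' [q' D3]].
  rewrite (aR _ (iR (star0 u))), (bar_factor_sq D2), <- aR, (bar_factor_ps D) in D3.
  apply injR, (bar_unique atR (bR _)). rewrite morR. exact (bar_factor_is_bar D3).
Qed.

Lemma LR_closed_setup : LR_closed mulL mulR iL iR barL barR.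
Proof.
  intros [[x a] h] [[y b] k]. unfold LR_first, LR_second; simpl in *.
  rewrite barL_mul_iL, barR_iR_mul, h, k. reflexivity.
Qed.

Local Notation LRt := (LR barL barR).
Local Notation mLR := (mulLR mulL mulR iL iR barL barR).
Let closed := LR_closed_setup.

Lemma LR_bar_mul p q : LR_bar (mLR p q) = mul0 (LR_bar p) (LR_bar q).
Proof. unfold LR_bar at 1. rewrite (mulLR_fst closed), barL_mul_iL. reflexivity. Qed.
Lemma LR_bar_morph : morphism mLR mul0 LR_bar.
Proof. exact LR_bar_mul. Qed.

Lemma LR_assoc : associative mLR.
Proof.
  intros p q r. apply LR_eq.
  - rewrite !(mulLR_fst closed), LR_bar_mul, morL, aL. reflexivity.
  - rewrite !(mulLR_snd closed), LR_bar_mul, morR, aR. reflexivity.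
Qed.

Lemma LR_idempotent p : idempotent mLR p <-> idempotent mul0 (LR_bar p).
Proof.
  split; [apply (idempotent_morph LR_bar_morph)|]. intros I. apply LR_eq.
  - rewrite (mulLR_fst closed). exact (mulL_iL_barL_idem I).
  - rewrite (mulLR_snd closed). rewrite LR_bar_snd in *. exact (mulR_iR_barR_idem I).
Qed.

Definition LR_left (x : L) : LRt := exist _ (x, iR (barL x)) (eq_sym (barR_iR (barL x))).
Definition LR_right (a : R) : LRt := exist _ (iL (barR a), a) (barL_iL (barR a)).
Definition LR_diag (u : S0) : LRt :=
  exist _ (iL u, iR u) (eq_trans (barL_iL u) (eq_sym (barR_iR u))).

Lemma LR_bar_diag u : LR_bar (LR_diag u) = u.
Proof. exact (barL_iL u). Qed.
Lemma LR_diag_morph : morphism mul0 mLR LR_diag.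
Proof.
  intros u v. apply LR_eq.
  - rewrite (mulLR_fst closed), LR_bar_diag; cbn. rewrite morL. reflexivity.
  - rewrite (mulLR_snd closed), LR_bar_diag; cbn. rewrite morR. reflexivity.
Qed.
Lemma LR_diag_inj : injective LR_diag.
Proof. intros u v H. rewrite <- (LR_bar_diag u), <- (LR_bar_diag v), H. reflexivity. Qed.

Lemma LR_plus p : exists E, idempotent mLR E /\ Rstar mLR p E /\
  GreenL mLR E (LR_diag (plus0 (LR_bar p))) /\ mLR E (LR_diag (LR_bar p)) = LR_left (LR_fst p).
Proof.
  destruct (L_decomp (LR_fst p)) as [e [Be [Ee [Ex Rx]]]]. fold (LR_bar p) in *.
  pose proof (plus0_spec (LR_bar p)) as [Iw Rw].
  set (s := LR_bar p) in *. set (w := plus0 s) in *.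
  assert (bE : LR_bar (LR_left e) = w) by exact Be.
  exists (LR_left e). split; [apply LR_idempotent; rewrite bE; exact Iw|]. split; [|split].
  - apply (Rstar_LR closed (c := Some e)); rewrite ?bE.
    + exact Ex.
    + symmetry; exact Ee.
    + exact (image_transversal_Rstar injL morL atL Rw).
    + cbn. rewrite Be. unfold w, s. rewrite LR_bar_snd. apply R_Rstar_plus0.
  - apply GreenL_idem_intro; apply LR_eq;
      rewrite ?(mulLR_fst closed), ?(mulLR_snd closed), ?bE, ?LR_bar_diag; cbn; rewrite ?Be.
    + exact Ee.
    + rewrite <- morR, Iw. reflexivity.
    + rewrite <- morL, Iw. reflexivity.
    + rewrite <- morR, Iw. reflexivity.
  - apply LR_eq; rewrite ?(mulLR_fst closed), ?(mulLR_snd closed), ?bE, ?LR_bar_diag; cbn.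
    + symmetry; exact Ex.
    + rewrite <- morR. unfold w. rewrite plus0_mul. reflexivity.
Qed.

Lemma LR_star p : exists F, idempotent mLR F /\ Lstar mLR p F /\
  GreenR mLR F (LR_diag (star0 (LR_bar p))) /\ mLR (LR_left (LR_fst p)) F = p.
Proof.
  destruct (R_decomp (LR_snd p)) as [h [Bh [Eh [Ea La]]]]. rewrite <- LR_bar_snd in *.
  pose proof (star0_spec (LR_bar p)) as [Iw Lw].
  set (s := LR_bar p) in *. set (w := star0 s) in *.
  assert (bF : LR_bar (LR_right h) = w) by (unfold LR_bar; cbn; rewrite barL_iL; exact Bh).
  exists (LR_right h). split; [apply LR_idempotent; rewrite bF; exact Iw|]. split; [|split].
  - apply (Lstar_LR closed (c := Some h)); rewrite ?bF.
    + exact Ea.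
    + symmetry; exact Eh.
    + exact (image_transversal_Lstar injR morR atR Lw).
    + cbn. rewrite Bh. apply L_Lstar_star0.
  - apply GreenR_idem_intro; apply LR_eq;
      rewrite ?(mulLR_fst closed), ?(mulLR_snd closed), ?bF, ?LR_bar_diag; cbn; rewrite ?Bh.
    + rewrite <- morL, Iw. reflexivity.
    + exact Eh.
    + rewrite <- morL, Iw. reflexivity.
    + rewrite <- morR, Iw. reflexivity.
  - apply LR_eq; rewrite ?(mulLR_fst closed), ?(mulLR_snd closed), ?bF; cbn.
    + apply mulL_iL_star0.
    + symmetry; exact Ea.
Qed.

Lemma LR_abundant : abundant mLR.
Proof.
  intros p _. split.
  - destruct (LR_plus p) as [E [IE [RE _]]]. exists E. split; [exact I|]. split; [exact IE|].
    exact (Rstar_RstarIn RE).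
  - destruct (LR_star p) as [F [IF [LF _]]]. exists F. split; [exact I|]. split; [exact IF|].
    exact (Lstar_LstarIn LF).
Qed.

Lemma LR_quasi_adequate : quasi_adequate mLR.
Proof.
  split; [exact LR_abundant|]. intros e f Ie If.
  apply LR_idempotent in Ie, If. apply LR_idempotent. rewrite LR_bar_mul.
  exact (idempotent_mul_comm a0 (S0_idem_comm I I Ie If) Ie If).
Qed.

Lemma is_plus_LR_diag u : is_plus mLR (image LR_diag) (LR_diag u) (LR_diag (plus0 u)).
Proof. apply (is_plus_image LR_diag_inj LR_diag_morph), plus0_spec. Qed.
Lemma is_star_LR_diag u : is_star mLR (image LR_diag) (LR_diag u) (LR_diag (star0 u)).
Proof. apply (is_star_image LR_diag_inj LR_diag_morph), star0_spec. Qed.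

Lemma Rstar_LR_diag u v : Rstar mul0 u v -> Rstar mLR (LR_diag u) (LR_diag v).
Proof.
  intros H. apply (Rstar_LR closed (c := None)); rewrite ?LR_bar_diag; cbn; auto.
  - exact (image_transversal_Rstar injL morL atL H).
  - exact (image_transversal_Rstar injR morR atR H).
Qed.
Lemma Lstar_LR_diag u v : Lstar mul0 u v -> Lstar mLR (LR_diag u) (LR_diag v).
Proof.
  intros H. apply (Lstar_LR closed (c := None)); rewrite ?LR_bar_diag; cbn; auto.
  - exact (image_transversal_Lstar injR morR atR H).
  - exact (image_transversal_Lstar injL morL atL H).
Qed.

Lemma LR_is_bar p : is_bar mLR (image LR_diag) p (LR_diag (LR_bar p)).
Proof.
  destruct (LR_plus p) as [E [IE [_ [GE EE]]]], (LR_star p) as [F [IF [_ [GF EF]]]].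
  apply is_bar_factor. exists E, F, (LR_diag (plus0 (LR_bar p))), (LR_diag (star0 (LR_bar p))).
  constructor; auto using image_self, is_plus_LR_diag, is_star_LR_diag.
  rewrite EE, EF. reflexivity.
Qed.

(* Applying the morphism [LR_bar] to a factorization [p = E (diag v) F] and using that
   L- (R-)related idempotents of the adequate semigroup [S0] coincide gives [LR_bar p = v]. *)
Lemma LR_is_bar_unique p t : is_bar mLR (image LR_diag) p t -> t = LR_diag (LR_bar p).
Proof.
  intros H. apply is_bar_factor in H as [E [F [p' [q' D]]]].
  destruct (bf_transversal D) as [v ->], (proj1 (bf_plus D)) as [v' Ev'],
    (proj1 (bf_star D)) as [v'' Ev'']. f_equal.
  pose proof (bf_plus D) as Hp. rewrite Ev' in Hp.
  apply (is_plus_image LR_diag_inj LR_diag_morph) in Hp as [Iv' Rv'].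
  pose proof (bf_star D) as Hq. rewrite Ev'' in Hq.
  apply (is_star_image LR_diag_inj LR_diag_morph) in Hq as [Iv'' Lv''].
  pose proof (idempotent_morph LR_bar_morph (bf_idem_l D)) as IE.
  pose proof (idempotent_morph LR_bar_morph (bf_idem_r D)) as IF.
  pose proof (GreenL_morph LR_bar_morph (bf_GreenL D)) as GE.
  pose proof (GreenR_morph LR_bar_morph (bf_GreenR D)) as GF.
  rewrite Ev', LR_bar_diag in GE. rewrite Ev'', LR_bar_diag in GF.
  rewrite (bf_eq D), !LR_bar_mul, LR_bar_diag,
    (GreenL_idem_eq a0 (S0_idem_comm I I IE Iv') IE Iv' GE),
    (GreenR_idem_eq a0 (S0_idem_comm I I IF Iv'') IF Iv'' GF),
    (RstarIn_idem_mul (P := @full S0) I Iv' Rv'),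
    (LstarIn_idem_mul (P := @full S0) I Iv'' Lv'').
  reflexivity.
Qed.

Lemma LR_diag_transversal : adequate_transversal mLR (image LR_diag).
Proof.
  assert (Hab : abundant_in mLR (image LR_diag)).
  { intros a [u ->]. split; [exists (LR_diag (plus0 u)) | exists (LR_diag (star0 u))];
      [apply is_plus_LR_diag | apply is_star_LR_diag]. }
  split; [|split; [split; [exact Hab|] |]].
  - split; [|split; [exact Hab | split]].
    + intros a b [u ->] [v ->]. rewrite <- LR_diag_morph. apply image_self.
    + intros a b [u ->] [v ->]. split; [|apply Lstar_LstarIn].
      intros H. apply Lstar_LR_diag, (LstarIn_image LR_diag_inj LR_diag_morph), H.
    + intros a b [u ->] [v ->]. split; [|apply Rstar_RstarIn].
      intros H. apply Rstar_LR_diag, (RstarIn_image LR_diag_inj LR_diag_morph), H.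
  - intros e f [u ->] [v ->] Ie If.
    apply (idempotent_image LR_diag_inj LR_diag_morph) in Ie, If.
    rewrite <- !LR_diag_morph, (S0_idem_comm I I Ie If). reflexivity.
  - intros p. exists (LR_diag (LR_bar p)). split; [apply LR_is_bar|].
    intros t H. symmetry. exact (LR_is_bar_unique H).
Qed.

Lemma LR_diag_quasi_ideal : quasi_ideal mLR (image LR_diag).
Proof.
  intros a p b [u ->] [v ->]. exists (mul0 (mul0 u (LR_bar p)) v). apply LR_eq.
  - rewrite !(mulLR_fst closed), LR_bar_diag. cbn. rewrite !morL. reflexivity.
  - rewrite !(mulLR_snd closed), LR_bar_mul, LR_bar_diag. cbn. rewrite !morR. reflexivity.
Qed.

Lemma LR_diag_admissible : admissible mLR (image LR_diag).
Proof.
  intros x y s t Hs Ht.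
  rewrite (LR_is_bar_unique Hs), (LR_is_bar_unique Ht), <- LR_diag_morph, <- LR_bar_mul.
  apply LR_is_bar.
Qed.

End SpinedConstruction.

Section SpinedProductTheorem.
Variables (L R S0 : Type) (mulL : L -> L -> L) (mulR : R -> R -> R)
  (mul0 : S0 -> S0 -> S0) (iL : S0 -> L) (iR : S0 -> R)
  (barL : L -> S0) (barR : R -> S0).
Hypothesis setup : common_setup mulL mulR mul0 iL iR barL barR.

Local Notation mLR := (mulLR mulL mulR iL iR barL barR).

Lemma common_setup_closed : LR_closed mulL mulR iL iR barL barR.
Proof.
  destruct setup as [aL [aR [a0 [laL [raR [injL [morL [injR [morR
    [atL [qiL [atR [qiR [bL bR]]]]]]]]]]]]]].
  eapply LR_closed_setup; eauto.
Qed.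

Lemma spined_product_properties :
  associative mLR /\ quasi_adequate mLR /\
  exists phi : S0 -> LR barL barR,
    adequate_transversal mLR (image phi) /\ quasi_ideal mLR (image phi) /\
    admissible mLR (image phi) /\ injective phi /\ morphism mul0 mLR phi.
Proof.
  destruct setup as [aL [aR [a0 [laL [raR [injL [morL [injR [morR
    [atL [qiL [atR [qiR [bL bR]]]]]]]]]]]]]].
  split; [|split]; [eapply LR_assoc | eapply LR_quasi_adequate |]; eauto.
  exists (@LR_diag _ _ _ mulL mulR iL iR barL barR injL injR atL atR bL bR).
  split; [|split; [|split; [|split]]];
    [eapply LR_diag_transversal | eapply LR_diag_quasi_ideal | eapply LR_diag_admissible
    | eapply LR_diag_inj | eapply LR_diag_morph]; eauto.
Qed.

End SpinedProductTheorem.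

(** * Decomposing S as L |x| R with L = S S0 and R = S0 S *)

Section Subsemigroup.
Variables (T : Type) (mul : T -> T -> T) (Q : T -> Prop).
Hypothesis Qmul : subsemigroup mul Q.

Definition sub_mul (a b : sig Q) : sig Q :=
  exist Q (mul (proj1_sig a) (proj1_sig b)) (Qmul (proj2_sig a) (proj2_sig b)).

Lemma sub_eq (a b : sig Q) : proj1_sig a = proj1_sig b -> a = b.
Proof.
  destruct a as [a ha], b as [b hb]; simpl; intros ->. f_equal. apply proof_irrelevance.
Qed.
Lemma sub_eq_iff (a b : sig Q) : a = b <-> proj1_sig a = proj1_sig b.
Proof. split; [intros ->; reflexivity | apply sub_eq]. Qed.

Lemma sub_assoc : associative mul -> associative sub_mul.
Proof. intros assoc a b c. apply sub_eq, assoc. Qed.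

Lemma val_lmul1 X a :
  proj1_sig (lmul1 sub_mul X a) = lmul1 mul (option_map (@proj1_sig T Q) X) (proj1_sig a).
Proof. destruct X; reflexivity. Qed.
Lemma val_rmul1 a X :
  proj1_sig (rmul1 sub_mul a X) = rmul1 mul (proj1_sig a) (option_map (@proj1_sig T Q) X).
Proof. destruct X; reflexivity. Qed.

Lemma idempotent_sub a : idempotent sub_mul a <-> idempotent mul (proj1_sig a).
Proof. apply sub_eq_iff. Qed.

Lemma Rstar_sub a b : Rstar mul (proj1_sig a) (proj1_sig b) -> Rstar sub_mul a b.
Proof. intros H X Y _ _. rewrite !sub_eq_iff, !val_lmul1. apply H; apply in1_full. Qed.
Lemma Lstar_sub a b : Lstar mul (proj1_sig a) (proj1_sig b) -> Lstar sub_mul a b.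
Proof. intros H X Y _ _. rewrite !sub_eq_iff, !val_rmul1. apply H; apply in1_full. Qed.

Lemma GreenL_val a b : GreenL sub_mul a b -> GreenL mul (proj1_sig a) (proj1_sig b).
Proof.
  intros [X [Y [Ea Eb]]]. exists (option_map (@proj1_sig T Q) X), (option_map (@proj1_sig T Q) Y).
  rewrite <- !val_lmul1, <- Ea, <- Eb. auto.
Qed.
Lemma GreenR_val a b : GreenR sub_mul a b -> GreenR mul (proj1_sig a) (proj1_sig b).
Proof.
  intros [X [Y [Ea Eb]]]. exists (option_map (@proj1_sig T Q) X), (option_map (@proj1_sig T Q) Y).
  rewrite <- !val_rmul1, <- Ea, <- Eb. auto.
Qed.

End Subsemigroup.

Section SubTransversal.
Variables (T : Type) (mul : T -> T -> T) (P Q : T -> Prop).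
Hypotheses (assoc : associative mul)
  (HT : adequate_transversal mul P) (HQ : quasi_ideal mul P)
  (Qmul : subsemigroup mul Q) (P_Q : forall s, P s -> Q s)
  (Q_factor : forall x, Q x -> forall s, is_bar mul P x s ->
     exists e f p q, bar_factor mul P x e s f p q /\ Q e /\ Q f).

Local Notation mulQ := (sub_mul Qmul).
Local Notation mulP := (sub_mul (transversal_mul HT)).

Definition sub_in (s : sig P) : sig Q := exist Q (proj1_sig s) (P_Q (proj2_sig s)).

Lemma image_sub_in a : image sub_in a <-> P (proj1_sig a).
Proof.
  split; [intros [s ->]; exact (proj2_sig s)|].
  intros H. exists (exist P _ H). apply sub_eq. reflexivity.
Qed.
Lemma sub_in_inj : injective sub_in.
Proof. intros a b H. apply sub_eq. exact (f_equal (@proj1_sig _ _) H). Qed.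
Lemma sub_in_morph : morphism mulP mulQ sub_in.
Proof. intros a b. apply sub_eq. reflexivity. Qed.

Lemma in1_image_sub_in X :
  in1 (image sub_in) X <-> in1 P (option_map (@proj1_sig T Q) X).
Proof. destruct X; simpl; [apply image_sub_in | tauto]. Qed.
Lemma in1_lift_P x : in1 P x -> exists X, in1 (image sub_in) X /\ x = option_map (@proj1_sig T Q) X.
Proof.
  destruct x as [t|]; simpl; intros H.
  - exists (Some (exist Q t (P_Q H))). split; [apply image_sub_in|]; auto.
  - exists None. simpl. auto.
Qed.

Lemma RstarIn_sub a b :
  RstarIn mulQ (image sub_in) a b <-> RstarIn mul P (proj1_sig a) (proj1_sig b).
Proof.
  split.
  - intros H x y Hx Hy.
    destruct (in1_lift_P Hx) as [X [HX ->]], (in1_lift_P Hy) as [Y [HY ->]].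
    specialize (H X Y HX HY). rewrite !sub_eq_iff, !val_lmul1 in H. exact H.
  - intros H X Y HX HY. rewrite !sub_eq_iff, !val_lmul1.
    apply H; apply in1_image_sub_in; assumption.
Qed.
Lemma LstarIn_sub a b :
  LstarIn mulQ (image sub_in) a b <-> LstarIn mul P (proj1_sig a) (proj1_sig b).
Proof.
  split.
  - intros H x y Hx Hy.
    destruct (in1_lift_P Hx) as [X [HX ->]], (in1_lift_P Hy) as [Y [HY ->]].
    specialize (H X Y HX HY). rewrite !sub_eq_iff, !val_rmul1 in H. exact H.
  - intros H X Y HX HY. rewrite !sub_eq_iff, !val_rmul1.
    apply H; apply in1_image_sub_in; assumption.
Qed.

Lemma is_plus_sub s p : is_plus mulQ (image sub_in) s p <-> is_plus mul P (proj1_sig s) (proj1_sig p).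
Proof. unfold is_plus. rewrite image_sub_in, idempotent_sub, RstarIn_sub. tauto. Qed.
Lemma is_star_sub s q : is_star mulQ (image sub_in) s q <-> is_star mul P (proj1_sig s) (proj1_sig q).
Proof. unfold is_star. rewrite image_sub_in, idempotent_sub, LstarIn_sub. tauto. Qed.

Lemma is_bar_sub x t : is_bar mulQ (image sub_in) x t <-> is_bar mul P (proj1_sig x) (proj1_sig t).
Proof.
  split.
  - intros [Pt [e [f [Ie [If [E [[p [Hp G1]] [q [Hq G2]]]]]]]]].
    apply is_bar_factor. exists (proj1_sig e), (proj1_sig f), (proj1_sig p), (proj1_sig q).
    constructor.
    + apply image_sub_in; exact Pt.
    + exact (proj1 (idempotent_sub Qmul e) Ie).
    + exact (proj1 (idempotent_sub Qmul f) If).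
    + exact (f_equal (@proj1_sig _ _) E).
    + apply is_plus_sub; exact Hp.
    + exact (GreenL_val G1).
    + apply is_star_sub; exact Hq.
    + exact (GreenR_val G2).
  - intros Hb. destruct (Q_factor (proj2_sig x) Hb) as [e [f [p [q [D [Qe Qf]]]]]].
    pose proof (bar_factor_plus_P D) as Pp. pose proof (bar_factor_star_P D) as Pq.
    split; [apply image_sub_in, (bf_transversal D)|].
    exists (exist Q e Qe), (exist Q f Qf). split; [apply idempotent_sub, (bf_idem_l D)|].
    split; [apply idempotent_sub, (bf_idem_r D)|]. split; [apply sub_eq, (bf_eq D)|]. split.
    + exists (exist Q p (P_Q Pp)). split; [apply is_plus_sub, (bf_plus D)|].
      apply GreenL_idem_intro; apply sub_eq;
        [apply (bar_factor_ep assoc D) | apply (bar_factor_pe assoc D)].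
    + exists (exist Q q (P_Q Pq)). split; [apply is_star_sub, (bf_star D)|].
      apply GreenR_idem_intro; apply sub_eq;
        [apply (bar_factor_qf assoc D) | apply (bar_factor_fq assoc D)].
Qed.

Lemma sub_abundant : abundant mulQ.
Proof.
  intros [x Qx] _. destruct (bar_exists HT x) as [s Hs].
  destruct (Q_factor Qx Hs) as [e [f [p [q [D [Qe Qf]]]]]]. split.
  - exists (exist Q e Qe). split; [exact I|]. split; [apply idempotent_sub, (bf_idem_l D)|].
    apply Rstar_RstarIn, Rstar_sub, (bar_factor_Rstar assoc HT D).
  - exists (exist Q f Qf). split; [exact I|]. split; [apply idempotent_sub, (bf_idem_r D)|].
    apply Lstar_LstarIn, Lstar_sub, (bar_factor_Lstar assoc HT D).
Qed.

Lemma sub_transversal : adequate_transversal mulQ (image sub_in).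
Proof.
  assert (Hab : abundant_in mulQ (image sub_in)).
  { intros a Ha. apply image_sub_in in Ha. split.
    - destruct (transversal_plus HT Ha) as [p Hp]. exists (exist Q p (P_Q (proj1 Hp))).
      apply is_plus_sub; exact Hp.
    - destruct (transversal_star HT Ha) as [q Hq]. exists (exist Q q (P_Q (proj1 Hq))).
      apply is_star_sub; exact Hq. }
  split; [|split; [split; [exact Hab|]|]].
  - split; [|split; [exact Hab | split]].
    + intros a b Ha Hb. apply image_sub_in. apply image_sub_in in Ha, Hb.
      exact (transversal_mul HT Ha Hb).
    + intros a b Ha Hb. apply image_sub_in in Ha, Hb. split; [|apply Lstar_LstarIn].
      intros H. apply Lstar_sub, (transversal_Lstar HT Ha Hb), LstarIn_sub, H.
    + intros a b Ha Hb. apply image_sub_in in Ha, Hb. split; [|apply Rstar_RstarIn].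
      intros H. apply Rstar_sub, (transversal_Rstar HT Ha Hb), RstarIn_sub, H.
  - intros e f He Hf Ie If. apply image_sub_in in He, Hf.
    apply idempotent_sub in Ie, If. apply sub_eq. exact (transversal_idem_comm HT He Hf Ie If).
  - intros x. destruct (bar_exists HT (proj1_sig x)) as [s Hs].
    pose proof (proj1 Hs) as Ps.
    exists (exist Q s (P_Q Ps)). split; [apply is_bar_sub; exact Hs|].
    intros t Ht. apply sub_eq. apply is_bar_sub in Ht. exact (bar_unique HT Hs Ht).
Qed.

Lemma sub_quasi_ideal : quasi_ideal mulQ (image sub_in).
Proof.
  intros a x b Ha Hb. apply image_sub_in. apply image_sub_in in Ha, Hb. exact (HQ _ Ha Hb).
Qed.

End SubTransversal.

Section Decomposition.
Variables (T : Type) (mul : T -> T -> T) (P : T -> Prop).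
Hypotheses (assoc : associative mul)
  (HT : adequate_transversal mul P) (HQ : quasi_ideal mul P) (adm : admissible mul P).

Definition bar (x : T) : T :=
  proj1_sig (constructive_indefinite_description _ (bar_exists HT x)).
Lemma bar_spec x : is_bar mul P x (bar x).
Proof. unfold bar. destruct (constructive_indefinite_description _ _) as [s H]. exact H. Qed.
Lemma bar_P x : P (bar x).
Proof. exact (proj1 (bar_spec x)). Qed.

Definition bar_plus (x : T) : T :=
  proj1_sig (constructive_indefinite_description _ (transversal_plus HT (bar_P x))).
Definition bar_star (x : T) : T :=
  proj1_sig (constructive_indefinite_description _ (transversal_star HT (bar_P x))).
Lemma bar_plus_spec x : is_plus mul P (bar x) (bar_plus x).
Proof. unfold bar_plus. destruct (constructive_indefinite_description _ _) as [p H]. exact H. Qed.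
Lemma bar_star_spec x : is_star mul P (bar x) (bar_star x).
Proof. unfold bar_star. destruct (constructive_indefinite_description _ _) as [q H]. exact H. Qed.

Lemma bar_mul x y : bar (mul x y) = mul (bar x) (bar y).
Proof. apply (bar_unique HT (bar_spec _)), adm; apply bar_spec. Qed.
Lemma bar_transversal s : P s -> bar s = s.
Proof. intros Ps. exact (bar_unique HT (bar_spec s) (is_bar_transversal HT Ps)). Qed.

Lemma bar_factor_exists x : exists e f, bar_factor mul P x e (bar x) f (bar_plus x) (bar_star x).
Proof.
  destruct (proj1 is_bar_factor (bar_spec x)) as [e [f [p [q D]]]].
  rewrite (plus_unique HT (bf_plus D) (bar_plus_spec x)),
    (star_unique HT (bf_star D) (bar_star_spec x)) in D.
  exists e, f. exact D.
Qed.

Lemma bar_sandwich x e f p q y g h p2 q2 :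
  bar_factor mul P x e (bar x) f p q -> bar_factor mul P y g (bar y) h p2 q2 ->
  mul (mul (bar x) (mul f g)) (bar y) = mul (bar x) (bar y).
Proof.
  intros D1 D2. destruct (bar_factor_mul assoc HT HQ D1 D2) as [p' [q' D3]].
  rewrite <- bar_mul. exact (bar_unique HT (bar_factor_is_bar D3) (bar_spec _)).
Qed.

Lemma bar_factor_mulr y v : P v -> exists e,
  bar_factor mul P (mul y v) e (bar (mul y v)) (bar_star (mul y v))
    (bar_plus (mul y v)) (bar_star (mul y v)).
Proof.
  intros Pv. destruct (bar_factor_exists y) as [e [f D1]].
  destruct (transversal_plus HT Pv) as [p2 Hp2], (transversal_star HT Pv) as [q2 Hq2].
  pose proof (bar_factor_transversal Pv Hp2 Hq2) as D2.
  destruct (bar_factor_mul assoc HT HQ D1 D2) as [p' [q' D3]].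
  assert (Hu : mul (mul (mul (bar y) (mul f p2)) v) q2 = mul (mul (bar y) (mul f p2)) v)
    by (rewrite <- assoc, (is_star_mul Hq2); reflexivity).
  destruct (is_star_below HT (proj1 Hq2) (proj1 (proj2 Hq2)) Hu (bf_star D3)) as [Eq' _].
  rewrite Eq', (bar_unique HT (bar_factor_is_bar D3) (bar_spec _)) in D3.
  rewrite (plus_unique HT (bf_plus D3) (bar_plus_spec _)),
    (star_unique HT (bf_star D3) (bar_star_spec _)) in D3.
  eexists; exact D3.
Qed.
Lemma bar_factor_mull v y : P v -> exists h,
  bar_factor mul P (mul v y) (bar_plus (mul v y)) (bar (mul v y)) h
    (bar_plus (mul v y)) (bar_star (mul v y)).
Proof.
  intros Pv. destruct (bar_factor_exists y) as [g [h D1]].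
  destruct (transversal_plus HT Pv) as [p2 Hp2], (transversal_star HT Pv) as [q2 Hq2].
  pose proof (bar_factor_transversal Pv Hp2 Hq2) as D2.
  destruct (bar_factor_mul assoc HT HQ D2 D1) as [p' [q' D3]].
  assert (Hu : mul p2 (mul (mul v (mul q2 g)) (bar y)) = mul (mul v (mul q2 g)) (bar y))
    by (rewrite !assoc, (is_plus_mul Hp2); reflexivity).
  destruct (is_plus_below HT (proj1 Hp2) (proj1 (proj2 Hp2)) Hu (bf_plus D3)) as [Ep' _].
  rewrite Ep', (bar_unique HT (bar_factor_is_bar D3) (bar_spec _)) in D3.
  rewrite (plus_unique HT (bf_plus D3) (bar_plus_spec _)),
    (star_unique HT (bf_star D3) (bar_star_spec _)) in D3.
  eexists; exact D3.
Qed.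

Definition QL (x : T) : Prop := exists y v, P v /\ x = mul y v.
Definition QR (x : T) : Prop := exists v y, P v /\ x = mul v y.

Lemma QL_mul : subsemigroup mul QL.
Proof. intros a _ _ [y [v [Pv ->]]]. exists (mul a y), v. split; auto. Qed.
Lemma QR_mul : subsemigroup mul QR.
Proof. intros _ b [v [y [Pv ->]]] _. exists v, (mul y b). split; auto. Qed.

Lemma P_QL s : P s -> QL s.
Proof.
  intros Ps. destruct (transversal_star HT Ps) as [q Hq].
  exists s, q. split; [exact (proj1 Hq) | symmetry; exact (is_star_mul Hq)].
Qed.
Lemma P_QR s : P s -> QR s.
Proof.
  intros Ps. destruct (transversal_plus HT Ps) as [p Hp].
  exists p, s. split; [exact (proj1 Hp) | symmetry; exact (is_plus_mul Hp)].
Qed.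

Lemma QL_bar_factor x : QL x -> exists e,
  bar_factor mul P x e (bar x) (bar_star x) (bar_plus x) (bar_star x).
Proof. intros [y [v [Pv ->]]]. exact (bar_factor_mulr y Pv). Qed.
Lemma QR_bar_factor x : QR x -> exists h,
  bar_factor mul P x (bar_plus x) (bar x) h (bar_plus x) (bar_star x).
Proof. intros [v [y [Pv ->]]]. exact (bar_factor_mull y Pv). Qed.

Lemma QL_factor x : QL x -> forall s, is_bar mul P x s ->
  exists e f p q, bar_factor mul P x e s f p q /\ QL e /\ QL f.
Proof.
  intros Qx s Hs. rewrite <- (bar_unique HT (bar_spec x) Hs).
  destruct (QL_bar_factor Qx) as [e D]. exists e, (bar_star x), (bar_plus x), (bar_star x).
  split; [exact D|]. split.
  - exists e, (bar_plus x).
    split; [exact (bar_factor_plus_P D) | symmetry; exact (bar_factor_ep assoc D)].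
  - exact (P_QL (bar_factor_star_P D)).
Qed.
Lemma QR_factor x : QR x -> forall s, is_bar mul P x s ->
  exists e f p q, bar_factor mul P x e s f p q /\ QR e /\ QR f.
Proof.
  intros Qx s Hs. rewrite <- (bar_unique HT (bar_spec x) Hs).
  destruct (QR_bar_factor Qx) as [h D]. exists (bar_plus x), h, (bar_plus x), (bar_star x).
  split; [exact D|]. split.
  - exact (P_QR (bar_factor_plus_P D)).
  - exists (bar_star x), h.
    split; [exact (bar_factor_star_P D) | symmetry; exact (bar_factor_qf assoc D)].
Qed.

Lemma bar_idempotent x : idempotent mul x -> idempotent mul (bar x).
Proof. unfold idempotent. intros H. rewrite <- bar_mul, H. reflexivity. Qed.

Lemma QL_idem_GreenL x : QL x -> idempotent mul x -> GreenL mul x (bar x).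
Proof.
  intros Qx Ix. destruct (QL_bar_factor Qx) as [e D].
  pose proof (bar_idempotent Ix) as Is.
  rewrite (plus_unique HT (bf_plus D) (is_plus_idem (bar_P x) Is)) in D.
  assert (Ex : x = e).
  { rewrite (bf_eq D) at 1. rewrite <- assoc, (bar_factor_sq D), (bar_factor_ep assoc D). reflexivity. }
  rewrite Ex at 1. exact (bf_GreenL D).
Qed.
Lemma QR_idem_GreenR x : QR x -> idempotent mul x -> GreenR mul x (bar x).
Proof.
  intros Qx Ix. destruct (QR_bar_factor Qx) as [h D].
  pose proof (bar_idempotent Ix) as Is.
  rewrite (star_unique HT (bf_star D) (is_star_idem (bar_P x) Is)) in D.
  assert (Ex : x = h).
  { rewrite (bf_eq D) at 1. rewrite (bar_factor_ps D), (bar_factor_qf assoc D). reflexivity. }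
  rewrite Ex at 1. exact (bf_GreenR D).
Qed.

Lemma QL_idem_eq e f : QL e -> QL f -> idempotent mul e -> idempotent mul f ->
  mul e f = f -> mul f e = e -> e = f.
Proof.
  intros Qe Qf Ie If Ef Fe.
  destruct (GreenL_idem_mul assoc Ie (bar_idempotent Ie) (QL_idem_GreenL Qe Ie)) as [E1 _].
  destruct (GreenL_idem_mul assoc If (bar_idempotent If) (QL_idem_GreenL Qf If)) as [_ F2].
  assert (Sb : bar e = bar f).
  { rewrite <- Fe at 1. rewrite bar_mul, <- (transversal_idem_comm HT (bar_P e) (bar_P f)
      (bar_idempotent Ie) (bar_idempotent If)), <- bar_mul, Ef. reflexivity. }
  symmetry. rewrite <- Ef at 1. rewrite <- E1 at 1. rewrite <- assoc, Sb, F2, <- Sb, E1. reflexivity.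
Qed.
Lemma QR_idem_eq e f : QR e -> QR f -> idempotent mul e -> idempotent mul f ->
  mul e f = e -> mul f e = f -> e = f.
Proof.
  intros Qe Qf Ie If Ef Fe.
  destruct (GreenR_idem_mul assoc Ie (bar_idempotent Ie) (QR_idem_GreenR Qe Ie)) as [E1 _].
  destruct (GreenR_idem_mul assoc If (bar_idempotent If) (QR_idem_GreenR Qf If)) as [_ F2].
  assert (Sb : bar e = bar f).
  { rewrite <- Ef at 1. rewrite bar_mul, (transversal_idem_comm HT (bar_P e) (bar_P f)
      (bar_idempotent Ie) (bar_idempotent If)), <- bar_mul, Fe. reflexivity. }
  symmetry. rewrite <- Fe at 1. rewrite <- E1 at 1. rewrite assoc, Sb, F2, <- Sb, E1. reflexivity.
Qed.

Local Notation mulL := (sub_mul QL_mul).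
Local Notation mulR := (sub_mul QR_mul).
Local Notation mul0 := (sub_mul (transversal_mul HT)).
Local Notation iL := (sub_in P_QL).
Local Notation iR := (sub_in P_QR).

Definition bar_sub (Q : T -> Prop) (x : sig Q) : sig P := exist P (bar (proj1_sig x)) (bar_P _).
Local Notation barL := (bar_sub (Q := QL)).
Local Notation barR := (bar_sub (Q := QR)).

Lemma QL_left_adequate : left_adequate mulL.
Proof.
  split; [exact (sub_abundant assoc HT QL_mul QL_factor)|].
  intros a e f Ie If Re Rf. pose proof (RstarIn_trans (RstarIn_sym Re) Rf) as Ref.
  pose proof (RstarIn_idem_mul (P := @full _) I Ie (RstarIn_sym Ref)) as Ef.
  pose proof (RstarIn_idem_mul (P := @full _) I If Ref) as Fe.
  apply sub_eq. apply (idempotent_sub QL_mul) in Ie, If.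
  exact (QL_idem_eq (proj2_sig e) (proj2_sig f) Ie If
           (f_equal (@proj1_sig _ _) Ef) (f_equal (@proj1_sig _ _) Fe)).
Qed.
Lemma QR_right_adequate : right_adequate mulR.
Proof.
  split; [exact (sub_abundant assoc HT QR_mul QR_factor)|].
  intros a e f Ie If Le Lf. pose proof (LstarIn_trans (LstarIn_sym Le) Lf) as Lef.
  pose proof (LstarIn_idem_mul (P := @full _) I If Lef) as Ef.
  pose proof (LstarIn_idem_mul (P := @full _) I Ie (LstarIn_sym Lef)) as Fe.
  apply sub_eq. apply (idempotent_sub QR_mul) in Ie, If.
  exact (QR_idem_eq (proj2_sig e) (proj2_sig f) Ie If
           (f_equal (@proj1_sig _ _) Ef) (f_equal (@proj1_sig _ _) Fe)).
Qed.

Lemma decomposition_setup : common_setup mulL mulR mul0 iL iR barL barR.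
Proof.
  do 3 (split; [apply sub_assoc, assoc|]).
  split; [exact QL_left_adequate|]. split; [exact QR_right_adequate|].
  split; [apply sub_in_inj|]. split; [exact (sub_in_morph HT QL_mul P_QL)|].
  split; [apply sub_in_inj|]. split; [exact (sub_in_morph HT QR_mul P_QR)|].
  split; [exact (sub_transversal assoc HT QL_mul P_QL QL_factor)|].
  split; [apply (sub_quasi_ideal HQ)|].
  split; [exact (sub_transversal assoc HT QR_mul P_QR QR_factor)|].
  split; [apply (sub_quasi_ideal HQ)|].
  split; intros x.
  - apply (is_bar_sub assoc QL_mul P_QL QL_factor), bar_spec.
  - apply (is_bar_sub assoc QR_mul P_QR QR_factor), bar_spec.
Qed.


Local Notation mLR := (mulLR mulL mulR iL iR barL barR).
Let closed := common_setup_closed decomposition_setup.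

Lemma bar_plus_eq x y : bar x = bar y -> bar_plus x = bar_plus y.
Proof. intros E. apply (plus_unique HT (bar_plus_spec x)). rewrite E. apply bar_plus_spec. Qed.
Lemma bar_star_eq x y : bar x = bar y -> bar_star x = bar_star y.
Proof. intros E. apply (star_unique HT (bar_star_spec x)). rewrite E. apply bar_star_spec. Qed.

Lemma bar_mul_star x : bar (mul x (bar_star x)) = bar x.
Proof.
  rewrite bar_mul, (bar_transversal (proj1 (bar_star_spec x))).
  exact (is_star_mul (bar_star_spec x)).
Qed.
Lemma bar_plus_mul x : bar (mul (bar_plus x) x) = bar x.
Proof.
  rewrite bar_mul, (bar_transversal (proj1 (bar_plus_spec x))).
  exact (is_plus_mul (bar_plus_spec x)).
Qed.

Lemma bar_factor_mul_star x e f : bar_factor mul P x e (bar x) f (bar_plus x) (bar_star x) ->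
  mul x (bar_star x) = mul e (bar x).
Proof.
  intros D. pose proof (bar_factor_fq assoc D) as Efq. pose proof (bar_factor_sq D) as Esq.
  set (s := bar x) in *. set (q := bar_star x) in *.
  rewrite (bf_eq D), <- assoc, Efq, <- assoc, Esq. reflexivity.
Qed.
Lemma bar_factor_plus_mul x e f : bar_factor mul P x e (bar x) f (bar_plus x) (bar_star x) ->
  mul (bar_plus x) x = mul (bar x) f.
Proof.
  intros D. pose proof (bar_factor_pe assoc D) as Epe. pose proof (bar_factor_ps D) as Eps.
  set (s := bar x) in *. set (p := bar_plus x) in *.
  rewrite (bf_eq D), !assoc, Epe, Eps. reflexivity.
Qed.

Lemma mul_star_bar x y :
  mul (mul x y) (bar_star (mul x y)) = mul (mul x (bar_star x)) (bar y).
Proof.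
  destruct (bar_factor_exists x) as [e [f D1]], (bar_factor_exists y) as [g [h D2]].
  pose proof (bar_sandwich D1 D2) as Hs.
  pose proof (bar_star_spec (mul x y)) as Hq. rewrite bar_mul in Hq.
  assert (Hhq : mul h (bar_star (mul x y)) = bar_star (mul x y)).
  { apply (GreenR_idem_absorb assoc (bf_idem_r D2) (bar_factor_star_idem D2) (bf_GreenR D2)).
    refine (proj2 (is_star_below HT (bar_factor_star_P D2) (bar_factor_star_idem D2) _ Hq)).
    rewrite <- assoc, (bar_factor_sq D2). reflexivity. }
  rewrite (bar_factor_mul_star D1).
  set (q := bar_star (mul x y)) in *. set (s := bar x) in *. set (t := bar y) in *.
  transitivity (mul (mul e (mul (mul s (mul f g)) t)) (mul h q)).
  { rewrite (bf_eq D1), (bf_eq D2). rewrite <- !assoc. reflexivity. }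
  rewrite Hs, Hhq, <- assoc, (is_star_mul Hq), assoc. reflexivity.
Qed.
Lemma plus_mul_bar x y :
  mul (bar_plus (mul x y)) (mul x y) = mul (bar x) (mul (bar_plus y) y).
Proof.
  destruct (bar_factor_exists x) as [e [f D1]], (bar_factor_exists y) as [g [h D2]].
  pose proof (bar_sandwich D1 D2) as Hs.
  pose proof (bar_plus_spec (mul x y)) as Hp. rewrite bar_mul in Hp.
  assert (Hpe : mul (bar_plus (mul x y)) e = bar_plus (mul x y)).
  { apply (GreenL_idem_absorb assoc (bf_idem_l D1) (bar_factor_plus_idem D1) (bf_GreenL D1)).
    refine (proj2 (is_plus_below HT (bar_factor_plus_P D1) (bar_factor_plus_idem D1) _ Hp)).
    rewrite assoc, (bar_factor_ps D1). reflexivity. }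
  rewrite (bar_factor_plus_mul D2).
  set (p := bar_plus (mul x y)) in *. set (s := bar x) in *. set (t := bar y) in *.
  transitivity (mul (mul p e) (mul (mul (mul s (mul f g)) t) h)).
  { rewrite (bf_eq D1), (bf_eq D2). rewrite <- !assoc. reflexivity. }
  rewrite Hpe, Hs, assoc, (is_plus_mul Hp), <- assoc. reflexivity.
Qed.

Lemma QL_mul_star x : QL (mul x (bar_star x)).
Proof. exists x, (bar_star x). split; [exact (proj1 (bar_star_spec x)) | reflexivity]. Qed.
Lemma QR_plus_mul x : QR (mul (bar_plus x) x).
Proof. exists (bar_plus x), x. split; [exact (proj1 (bar_plus_spec x)) | reflexivity]. Qed.

Definition psi_fst (x : T) : sig QL := exist QL (mul x (bar_star x)) (QL_mul_star x).
Definition psi_snd (x : T) : sig QR := exist QR (mul (bar_plus x) x) (QR_plus_mul x).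
Lemma psi_bar x : barL (psi_fst x) = barR (psi_snd x).
Proof. apply sub_eq. cbn. rewrite bar_mul_star, bar_plus_mul. reflexivity. Qed.

Definition psi (x : T) : LR barL barR := exist _ (psi_fst x, psi_snd x) (psi_bar x).

Lemma psi_morph : morphism mul mLR psi.
Proof.
  intros x y. apply LR_eq.
  - rewrite (mulLR_fst closed). apply sub_eq. cbn. rewrite bar_mul_star. apply mul_star_bar.
  - rewrite (mulLR_snd closed). apply sub_eq. cbn. rewrite bar_mul_star. apply plus_mul_bar.
Qed.

Lemma psi_inj : injective psi.
Proof.
  intros x y H.
  assert (H1 : mul x (bar_star x) = mul y (bar_star y))
    by exact (f_equal (fun r => proj1_sig (LR_fst r)) H).
  assert (H2 : mul (bar_plus x) x = mul (bar_plus y) y)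
    by exact (f_equal (fun r => proj1_sig (LR_snd r)) H).
  assert (Sb : bar x = bar y) by (rewrite <- bar_mul_star, H1, bar_mul_star; reflexivity).
  destruct (bar_factor_exists x) as [e [f D1]], (bar_factor_exists y) as [e' [f' D2]].
  rewrite (bar_factor_mul_star D1), (bar_factor_mul_star D2), <- Sb in H1.
  rewrite (bar_factor_plus_mul D1), (bar_factor_plus_mul D2), <- Sb in H2.
  rewrite <- Sb, <- (bar_plus_eq Sb), <- (bar_star_eq Sb) in D2.
  pose proof (bar_plus_spec x) as [Pp [_ Rp]]. pose proof (bar_star_spec x) as [Pq [_ Lq]].
  assert (Ee : e = e').
  { apply (Rstar_cancel (transversal_Rstar HT (bar_P x) Pp Rp)) in H1.
    rewrite (bar_factor_ep assoc D1), (bar_factor_ep assoc D2) in H1. exact H1. }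
  assert (Ef : f = f').
  { apply (Lstar_cancel (transversal_Lstar HT (bar_P x) Pq Lq)) in H2.
    rewrite (bar_factor_qf assoc D1), (bar_factor_qf assoc D2) in H2. exact H2. }
  rewrite (bf_eq D1), (bf_eq D2), Ee, Ef. reflexivity.
Qed.

Lemma psi_surj : surjective psi.
Proof.
  intros [[[l Ql] [r Qr]] H].
  assert (Sb : bar l = bar r) by exact (f_equal (@proj1_sig _ _) H).
  destruct (QL_bar_factor Ql) as [e D1], (QR_bar_factor Qr) as [h D2].
  rewrite <- Sb, <- (bar_plus_eq Sb), <- (bar_star_eq Sb) in D2.
  set (w := mul (mul e (bar l)) h).
  assert (Dw : bar_factor mul P w e (bar l) h (bar_plus l) (bar_star l))
    by (destruct D1, D2; constructor; auto).
  assert (Bw : bar w = bar l) by exact (bar_unique HT (bar_spec w) (bar_factor_is_bar Dw)).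
  rewrite <- Bw, <- (bar_plus_eq Bw), <- (bar_star_eq Bw) in Dw.
  exists w. apply LR_eq; apply sub_eq; cbn.
  - rewrite (bf_eq D1) at 1. rewrite <- assoc, (bar_factor_sq D1), (bar_factor_mul_star Dw), Bw.
    reflexivity.
  - rewrite (bf_eq D2) at 1. rewrite (bar_factor_ps D2), (bar_factor_plus_mul Dw), Bw.
    reflexivity.
Qed.

End Decomposition.

Theorem corollary2p18 :
  (forall (L R S0 : Type) (mulL : L -> L -> L) (mulR : R -> R -> R)
     (mul0 : S0 -> S0 -> S0) (iL : S0 -> L) (iR : S0 -> R)
     (barL : L -> S0) (barR : R -> S0),
     common_setup mulL mulR mul0 iL iR barL barR ->
     LR_closed mulL mulR iL iR barL barR /\
     associative (mulLR mulL mulR iL iR barL barR) /\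
     quasi_adequate (mulLR mulL mulR iL iR barL barR) /\
     exists P0 : LR barL barR -> Prop,
       adequate_transversal (mulLR mulL mulR iL iR barL barR) P0 /\
       quasi_ideal (mulLR mulL mulR iL iR barL barR) P0 /\
       admissible (mulLR mulL mulR iL iR barL barR) P0 /\
       exists phi : S0 -> LR barL barR,
         injective phi /\ morphism mul0 (mulLR mulL mulR iL iR barL barR) phi /\
         (forall p, P0 p <-> image phi p))
  /\
  (forall (S : Type) (mulS : S -> S -> S) (P0 : S -> Prop),
     associative mulS -> quasi_adequate mulS ->
     adequate_transversal mulS P0 -> quasi_ideal mulS P0 -> admissible mulS P0 ->
     exists (L R S0 : Type) (mulL : L -> L -> L) (mulR : R -> R -> R)
       (mul0 : S0 -> S0 -> S0) (iL : S0 -> L) (iR : S0 -> R)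
       (barL : L -> S0) (barR : R -> S0),
       common_setup mulL mulR mul0 iL iR barL barR /\
       exists psi : S -> LR barL barR,
         injective psi /\ surjective psi /\
         morphism mulS (mulLR mulL mulR iL iR barL barR) psi).
Proof.
  split.
  - intros L R S0 mulL mulR mul0 iL iR barL barR setup.
    destruct (spined_product_properties setup)
      as [Hassoc [Hqa [phi [HT [HQ [Hadm [Hinj Hmorph]]]]]]].
    split; [exact (common_setup_closed setup)|]. split; [exact Hassoc|]. split; [exact Hqa|].
    exists (image phi). split; [exact HT|]. split; [exact HQ|]. split; [exact Hadm|].
    exists phi. split; [exact Hinj|]. split; [exact Hmorph|]. tauto.
  - intros S mulS P0 Hassoc _ HT HQ Hadm.
    do 10 eexists. split; [exact (decomposition_setup Hassoc HT HQ Hadm)|].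
    exists (psi HT Hadm).
    split; [|split]; [eapply psi_inj | eapply psi_surj | eapply psi_morph]; eauto.
Qed.
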